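(* Let $\mathcal S=\{s_1,\dots,s_n,(p_1,l_1),\dots,(p_m,l_m)\}$ be a configuration and let $J\subseteq J_{\mathcal S}$ be a linear subspace such that (1) $\mathcal Z(J)=\{s_1,\dots,s_n,p_1,\dots,p_m\}$; (2) for every $i$, the linear space $\{\nabla q(s_i): q\in J\}\subseteq\mathbb R^3$ has dimension $2$ (i.e. $G_J(s_i)$ is a projective line); (3) for every $j$, there is $q\in J$ with $\nabla q(p_j)\neq 0$; (4) for every $j$, $\mathcal Z(E_J(p_j))\cap l_j=\{p_j\}$, where $E_J(p)=\{q\in J:\operatorname{ord}_p(q)\ge2\}$. Then $\operatorname{span}(F_{\mathcal S})=I_{\mathcal S}$, and for any basis $q_1,\dots,q_k$ of $J$ the form $q_1^2+\dots+q_k^2$ is an inner form of $F_{\mathcal S}$.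
   Context: Notation. $H_k\subseteq\mathbb R[x,y,z]$ is the real vector space of ternary forms of degree $k$. For $I\subseteq H_k$, $\mathcal Z(I)=\{a\in\mathbb P^2(\mathbb R): f(a)=0\ \forall f\in I\}$. $P_{3,4}=\{f\in H_4: f\ge0\text{ on }\mathbb P^2(\mathbb R)\}$. A face of $P_{3,4}$ is a convex subcone $F$ such that $a,b\in P_{3,4}$, $a+b\in F$ imply $a,b\in F$. For $f\in P_{3,4}$, $F_f=\{g\in P_{3,4}: f-\epsilon g\in P_{3,4}$ for some $\epsilon>0\}$; $f$ is an inner form of the face $F$ if $F_f=F$. $J_F=\{q\in H_2:q^2\in F\}$. For $p\in\mathbb P^2(\mathbb R)$ and $q$ a form, $\operatorname{ord}_p(q)$ is its order of vanishing at $p$ (least degree of a nonzero homogeneous component in affine coordinates centered at $p$). Local notation. For $p\in\mathbb P^2(\mathbb R)$, affine coordinates centered at $p$ are obtained by an invertible real linear change of coordinates sending $p$ to $(0:0:1)$ and setting $z=1$; $f\in H_4$ becomes $f(x,y)=\sum a_{ij}x^iy^j=f_0+\dots+f_4$. For $\operatorname{ord}_pf\ge2$ and a real line $l\ni p$ with coordinates chosen so $l=\{y=0\}$, $\tilde f(x,y)=f(x,xy)/x^2$. Sets. $F_s=\{f\in P_{3,4}: f(s)=0\}$, $I_s=\{f\in H_4:\operatorname{ord}_sf\ge2\}$; $F_{(p,l)}=\{f\in P_{3,4}: f(p)=0,\ \tilde f(0,0)=0\}$ and $I_{(p,l)}=\{f\in H_4: a_{00}=a_{10}=a_{01}=a_{20}=a_{11}=a_{30}=0\}$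 (coordinates centered at $p$, $l=\{y=0\}$). A configuration is $\mathcal S=\{s_1,\dots,s_n,(p_1,l_1),\dots,(p_m,l_m)\}$ with $s_1,\dots,s_n,p_1,\dots,p_m\in\mathbb P^2(\mathbb R)$ pairwise distinct and $l_j$ real lines with $p_j\in l_j$; $F_{\mathcal S}=\bigcap_iF_{s_i}\cap\bigcap_jF_{(p_j,l_j)}$, $I_{\mathcal S}=\bigcap_iI_{s_i}\cap\bigcap_jI_{(p_j,l_j)}$, $J_{\mathcal S}=J_{F_{\mathcal S}}$. *)

From Stdlib Require Import Reals List Arith.
Import ListNotations.
Open Scope R_scope.

(** Points of R^3 (representatives of points of P^2(R)). *)
Definition Pt := (R * R * R)%type.
Definition px (v : Pt) : R := fst (fst v).
Definition py (v : Pt) : R := snd (fst v).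
Definition pz (v : Pt) : R := snd v.
Definition pt0 : Pt := (0, 0, 0).
Definition scal (t : R) (v : Pt) : Pt := (t * px v, t * py v, t * pz v).
Definition dot (u v : Pt) : R := px u * px v + py u * py v + pz u * pz v.
Definition cross (u v : Pt) : Pt :=
  (py u * pz v - pz u * py v, pz u * px v - px u * pz v, px u * py v - py u * px v).

(** Two nonzero vectors represent the same projective point. *)
Definition proj_eq (a v : Pt) : Prop := exists t : R, t <> 0 /\ v = scal t a.

(** 3x3 real matrices, given by their rows. *)
Definition Mat := (Pt * Pt * Pt)%type.
Definition mat_apply (M : Mat) (v : Pt) : Pt :=
  (dot (fst (fst M)) v, dot (snd (fst M)) v, dot (snd M) v).
Definition det (M : Mat) : R := dot (fst (fst M)) (cross (snd (fst M)) (snd M)).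

Definition hom_poly (k : nat) (c : nat -> nat -> R) (v : Pt) : R :=
  sum_f_R0 (fun i =>
    sum_f_R0 (fun j => c i j * px v ^ i * py v ^ j * pz v ^ (k - i - j)) (k - i)) k.

(** Ternary forms are represented as functions R^3 -> R; H_k is the set of
    those given by a homogeneous polynomial of degree k. *)
Definition form := Pt -> R.
Definition in_H (k : nat) (f : form) : Prop :=
  exists c : nat -> nat -> R, forall v, f v = hom_poly k c v.

Definition P34 (f : form) : Prop := in_H 4 f /\ forall v, 0 <= f v.

Definition face_of (f : form) (g : form) : Prop :=
  P34 g /\ exists eps : R, 0 < eps /\ P34 (fun v => f v - eps * g v).

(** Local coordinates: M is an invertible linear change of coordinates
    sending (0:0:1) to p; the coefficient a_ij of the dehomogenized form
    f(M(x,y,1)) is the coefficient c i j of x^i y^j z^(k-i-j) in f o M. *)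
Definition centered (M : Mat) (p : Pt) : Prop :=
  det M <> 0 /\ proj_eq p (mat_apply M (0, 0, 1)).
Definition local_coeffs (k : nat) (M : Mat) (f : form) (c : nat -> nat -> R) : Prop :=
  forall v, f (mat_apply M v) = hom_poly k c v.

(** A real line is given by a nonzero linear form L: l = {v | L.v = 0}. *)
Definition on_line (L v : Pt) : Prop := dot L v = 0.
Definition adapted (M : Mat) (L : Pt) : Prop :=
  forall v, on_line L (mat_apply M v) <-> py v = 0.

(** ord_p(f) >= 2 for f of degree k (independent of the chart). *)
Definition ord_ge2 (k : nat) (p : Pt) (f : form) : Prop :=
  forall M c, centered M p -> local_coeffs k M f c ->
    c 0%nat 0%nat = 0 /\ c 1%nat 0%nat = 0 /\ c 0%nat 1%nat = 0.

(** tilde f(x,y) = f(x,xy)/x^2, for f(x,y) = sum a_ij x^i y^j with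
    a_00 = a_10 = a_01 = 0:  tilde f(x,y) = sum_{i+j>=2} a_ij x^(i+j-2) y^j. *)
Definition ftilde (c : nat -> nat -> R) (x y : R) : R :=
  sum_f_R0 (fun i =>
    sum_f_R0 (fun j => if (2 <=? i + j)%nat then c i j * x ^ (i + j - 2) * y ^ j else 0)
      (4 - i)) 4.

Definition F_pt (s : Pt) (f : form) : Prop := P34 f /\ f s = 0.
Definition I_pt (s : Pt) (f : form) : Prop := in_H 4 f /\ ord_ge2 4 s f.
Definition F_pl (p L : Pt) (f : form) : Prop :=
  P34 f /\ f p = 0 /\
  forall M c, centered M p -> adapted M L -> local_coeffs 4 M f c -> ftilde c 0 0 = 0.
Definition I_pl (p L : Pt) (f : form) : Prop :=
  in_H 4 f /\
  forall M c, centered M p -> adapted M L -> local_coeffs 4 M f c ->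
    c 0%nat 0%nat = 0 /\ c 1%nat 0%nat = 0 /\ c 0%nat 1%nat = 0 /\
    c 2%nat 0%nat = 0 /\ c 1%nat 1%nat = 0 /\ c 3%nat 0%nat = 0.

(** A configuration: points s_1..s_n (list ss) and pairs (p_j, l_j) (list pls,
    l_j given by a nonzero linear form). *)
Definition all_pts (ss : list Pt) (pls : list (Pt * Pt)) : list Pt := ss ++ map fst pls.
Definition configuration (ss : list Pt) (pls : list (Pt * Pt)) : Prop :=
  (forall a, In a (all_pts ss pls) -> a <> pt0) /\
  (forall pl, In pl pls -> snd pl <> pt0 /\ on_line (snd pl) (fst pl)) /\
  (forall i j, (i < j < length (all_pts ss pls))%nat ->
     ~ proj_eq (nth i (all_pts ss pls) pt0) (nth j (all_pts ss pls) pt0)).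

Definition F_S (ss : list Pt) (pls : list (Pt * Pt)) (f : form) : Prop :=
  P34 f /\ (forall s, In s ss -> F_pt s f) /\
  (forall pl, In pl pls -> F_pl (fst pl) (snd pl) f).
Definition I_S (ss : list Pt) (pls : list (Pt * Pt)) (f : form) : Prop :=
  in_H 4 f /\ (forall s, In s ss -> I_pt s f) /\
  (forall pl, In pl pls -> I_pl (fst pl) (snd pl) f).
Definition J_S (ss : list Pt) (pls : list (Pt * Pt)) (q : form) : Prop :=
  in_H 2 q /\ F_S ss pls (fun v => q v * q v).

Definition lincomb (cs : list R) (qs : list form) : form :=
  fun v => fold_right (fun aq acc => fst aq * snd aq v + acc) 0 (combine cs qs).
Definition in_span (S : form -> Prop) (f : form) : Prop :=
  exists (cs : list R) (qs : list form),
    length cs = length qs /\ (forall q, In q qs -> S q) /\ f = lincomb cs qs.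
Definition lin_subspace (k : nat) (J : form -> Prop) : Prop :=
  (forall q, J q -> in_H k q) /\ J (fun _ => 0) /\
  (forall q r, J q -> J r -> J (fun v => q v + r v)) /\
  (forall t q, J q -> J (fun v => t * q v)).
Definition is_basis (J : form -> Prop) (qs : list form) : Prop :=
  (forall q, In q qs -> J q) /\
  (forall cs, length cs = length qs -> lincomb cs qs = (fun _ => 0) ->
     forall a, In a cs -> a = 0) /\
  (forall q, J q -> exists cs, length cs = length qs /\ q = lincomb cs qs).
Definition sumsq (qs : list form) : form :=
  fun v => fold_right (fun q acc => q v * q v + acc) 0 qs.

Definition zero_set (J : form -> Prop) (v : Pt) : Prop := forall q, J q -> q v = 0.
Definition grad (q : form) (v g : Pt) : Prop :=
  derivable_pt_lim (fun t => q (t, py v, pz v)) (px v) (px g) /\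
  derivable_pt_lim (fun t => q (px v, t, pz v)) (py v) (py g) /\
  derivable_pt_lim (fun t => q (px v, py v, t)) (pz v) (pz g).
Definition grad_space (J : form -> Prop) (v : Pt) (g : Pt) : Prop :=
  exists q, J q /\ grad q v g.

Definition dim2 (S : Pt -> Prop) : Prop :=
  (exists u w, S u /\ S w /\
     forall a b, (a * px u + b * px w, a * py u + b * py w, a * pz u + b * pz w) = pt0 ->
       a = 0 /\ b = 0) /\
  (forall u w z, S u -> S w -> S z ->
     exists a b c, ~ (a = 0 /\ b = 0 /\ c = 0) /\
       (a * px u + b * px w + c * px z, a * py u + b * py w + c * py z,
        a * pz u + b * pz w + c * pz z) = pt0).

Definition E_J (J : form -> Prop) (p : Pt) (q : form) : Prop := J q /\ ord_ge2 2 p q.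

From Stdlib Require Import Reals List Lra Lia Psatz FunctionalExtensionality Classical ClassicalEpsilon.
From Coquelicot Require Compactness.
Open Scope R_scope.

(* Let S = q_1^2 + ... + q_k^2 for a finite family
   spanning J (one exists because dim H_2 = 6).  Three facts are combined.
   (a) S lies in F_S, and F_S is contained in I_S: a nonnegative quartic
       vanishing at p has order >= 2 there, and the extra condition at (p,l)
       forces a_30 = a_11 = 0 as well.
   (b) Key estimate: every f in I_S satisfies |f| <= C S.  Near s_i,
       hypothesis (2) gives S >= kappa |(zx, zy)|^2 on a cone in a chart
       centered at s_i while |f| <= K |(zx, zy)|^2; near p_j, hypotheses (3)
       and (4) give S >= kappa |(x^2, zy)|^2 in a chart adapted to (p_j, l_j)
       while |f| <= K |(x^2, zy)|^2.  Away from the zeros of S, which by (1)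
       are the points of the configuration, the bound is trivial; compactness
       of the sphere and homogeneity globalize it.
   (c) A nonnegative quartic dominated by S lies in F_S.
   Then f in I_S is (f + C S) - C S with both terms in F_S, and the face of
   P_{3,4} generated by S is exactly F_S. *)

(** * Finite sums and the spaces H_k of ternary forms. *)

Lemma sum_ext : forall f g N, (forall i, (i <= N)%nat -> f i = g i) ->
  sum_f_R0 f N = sum_f_R0 g N.
Proof.
  intros f g N; induction N; intros H; simpl.
  - apply H; lia.
  - rewrite IHN by (intros; apply H; lia). rewrite (H (S N)) by lia. reflexivity.
Qed.

Lemma sum_zero : forall f N, (forall i, (i <= N)%nat -> f i = 0) -> sum_f_R0 f N = 0.
Proof.
  intros f N; induction N; intros H; simpl.
  - apply H; lia.
  - rewrite IHN by (intros; apply H; lia). rewrite (H (S N)) by lia. ring.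
Qed.

Lemma sum_single : forall f N i, (i <= N)%nat ->
  (forall m, (m <= N)%nat -> m <> i -> f m = 0) -> sum_f_R0 f N = f i.
Proof.
  intros f N; induction N; intros i Hi H; simpl.
  - replace i with 0%nat by lia. reflexivity.
  - destruct (Nat.eq_dec i (S N)) as [->|Hne].
    + rewrite sum_zero. ring. intros; apply H; lia.
    + rewrite (IHN i) by (try lia; intros; apply H; lia).
      rewrite (H (S N)) by lia. ring.
Qed.

Lemma sum_scal : forall f N t, t * sum_f_R0 f N = sum_f_R0 (fun i => t * f i) N.
Proof.
  intros f N t; induction N; simpl. ring. rewrite <- IHN. ring.
Qed.

Lemma inH_ext : forall k f g, (forall v, f v = g v) -> in_H k f -> in_H k g.
Proof. intros k f g H [c Hc]. exists c. intro v. rewrite <- H. apply Hc. Qed.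

Lemma inH_add : forall k f g, in_H k f -> in_H k g -> in_H k (fun v => f v + g v).
Proof.
  intros k f g [c Hc] [d Hd]. exists (fun i j => c i j + d i j). intro v.
  rewrite Hc, Hd. unfold hom_poly. rewrite <- sum_plus. apply sum_ext. intros i _.
  rewrite <- sum_plus. apply sum_ext. intros j _. ring.
Qed.

Lemma inH_scal : forall k t f, in_H k f -> in_H k (fun v => t * f v).
Proof.
  intros k t f [c Hc]. exists (fun i j => t * c i j). intro v.
  rewrite Hc. unfold hom_poly. rewrite sum_scal. apply sum_ext. intros i _.
  rewrite sum_scal. apply sum_ext. intros j _. ring.
Qed.

Lemma inH_zero : forall k, in_H k (fun _ => 0).
Proof.
  intros k. exists (fun _ _ => 0). intro v. unfold hom_poly. symmetry.
  apply sum_zero. intros i _. apply sum_zero. intros j _. ring.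
Qed.

Lemma inH_sum : forall k (F : nat -> form) N, (forall i, (i <= N)%nat -> in_H k (F i)) ->
  in_H k (fun v => sum_f_R0 (fun i => F i v) N).
Proof.
  intros k F N; induction N; intros H; simpl.
  - apply H; lia.
  - apply inH_add. apply IHN; intros; apply H; lia. apply H; lia.
Qed.

Lemma inH_mono : forall k i j, (i + j <= k)%nat ->
  in_H k (fun v => px v ^ i * py v ^ j * pz v ^ (k - i - j)).
Proof.
  intros k i j Hij.
  exists (fun a b => if (Nat.eqb a i && Nat.eqb b j)%bool then 1 else 0).
  intro v. unfold hom_poly. rewrite (sum_single _ k i).
  2: lia.
  2:{ intros m _ Hm; apply sum_zero; intros b _.
      destruct (Nat.eqb_spec m i); [lia|]; simpl; ring. }
  rewrite (sum_single _ (k - i) j).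
  2: lia.
  2:{ intros m _ Hm. rewrite Nat.eqb_refl. destruct (Nat.eqb_spec m j); [lia|]; simpl; ring. }
  rewrite !Nat.eqb_refl. simpl. ring.
Qed.

Lemma mono_mul : forall a b i j i' j' v, (i + j <= a)%nat -> (i' + j' <= b)%nat ->
  (px v ^ i * py v ^ j * pz v ^ (a - i - j)) * (px v ^ i' * py v ^ j' * pz v ^ (b - i' - j'))
  = px v ^ (i + i') * py v ^ (j + j') * pz v ^ (a + b - (i + i') - (j + j')).
Proof.
  intros. replace (a + b - (i + i') - (j + j'))%nat with ((a - i - j) + (b - i' - j'))%nat by lia.
  rewrite !pow_add. ring.
Qed.

Lemma inH_mul : forall a b f g, in_H a f -> in_H b g -> in_H (a + b) (fun v => f v * g v).
Proof.
  intros a b f g [c Hc] [d Hd].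
  apply (inH_ext _ (fun v => sum_f_R0 (fun i => sum_f_R0 (fun j =>
     sum_f_R0 (fun i' => sum_f_R0 (fun j' =>
       (c i j * d i' j') * (px v ^ (i + i') * py v ^ (j + j') * pz v ^ (a + b - (i + i') - (j + j'))))
     (b - i')) b) (a - i)) a)).
  - intro v. rewrite Hc, Hd. unfold hom_poly.
    rewrite Rmult_comm, sum_scal. apply sum_ext. intros i Hi.
    rewrite sum_scal. apply sum_ext. intros j Hj.
    rewrite Rmult_comm, sum_scal. apply sum_ext. intros i' Hi'.
    rewrite sum_scal. apply sum_ext. intros j' Hj'.
    rewrite <- (mono_mul a b i j i' j' v) by lia. ring.
  - apply inH_sum. intros i Hi. apply inH_sum. intros j Hj.
    apply inH_sum. intros i' Hi'. apply inH_sum. intros j' Hj'.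
    eapply inH_ext; [|apply (inH_scal _ (c i j * d i' j')), inH_mono].
    intro; reflexivity. lia.
Qed.

Lemma inH_const : forall t, in_H 0 (fun _ => t).
Proof. intros t. exists (fun _ _ => t). intro v. unfold hom_poly. simpl. ring. Qed.

Lemma inH_lin : forall r, in_H 1 (fun v => dot r v).
Proof.
  intros r. exists (fun i j => match i, j with S O, O => px r | O, S O => py r | O, O => pz r | _, _ => 0 end).
  intro v. unfold hom_poly, dot. simpl. ring.
Qed.

Lemma inH_pow_lin : forall r n, in_H n (fun v => dot r v ^ n).
Proof.
  intros r n; induction n.
  - apply (inH_ext _ (fun _ => 1)); [intro; simpl; ring|apply inH_const].
  - apply (inH_ext _ (fun v => dot r v * dot r v ^ n)); [intro; simpl; ring|].
    apply (inH_mul 1 n); [apply inH_lin|apply IHn].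
Qed.

Lemma inH_deg : forall k k' f, k = k' -> in_H k f -> in_H k' f.
Proof. intros; subst; auto. Qed.

Lemma px_mat : forall M v, px (mat_apply M v) = dot (fst (fst M)) v. Proof. reflexivity. Qed.

Lemma py_mat : forall M v, py (mat_apply M v) = dot (snd (fst M)) v. Proof. reflexivity. Qed.

Lemma pz_mat : forall M v, pz (mat_apply M v) = dot (snd M) v. Proof. reflexivity. Qed.

Lemma inH_comp : forall k f M, in_H k f -> exists c, local_coeffs k M f c.
Proof.
  intros k f M [c Hc].
  assert (H : in_H k (fun v => hom_poly k c (mat_apply M v))).
  { unfold hom_poly. apply inH_sum. intros i Hi. apply inH_sum. intros j Hj.
    apply (inH_ext _ (fun v => c i j * ((dot (fst (fst M)) v ^ i * dot (snd (fst M)) v ^ j) * dot (snd M) v ^ (k - i - j)))).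
    intro v; cbv beta; rewrite px_mat, py_mat, pz_mat; ring.
    apply inH_scal. apply (inH_deg (i + j + (k - i - j))). lia.
    apply inH_mul; [apply inH_mul|]; apply inH_pow_lin. }
  destruct H as [d Hd]. exists d. intro v. rewrite Hc. apply Hd.
Qed.

Lemma hom4_scal : forall c t v, hom_poly 4 c (scal t v) = t ^ 4 * hom_poly 4 c v.
Proof. intros. unfold hom_poly, scal, px, py, pz. simpl. ring. Qed.

Lemma hom2_scal : forall c t v, hom_poly 2 c (scal t v) = t ^ 2 * hom_poly 2 c v.
Proof. intros. unfold hom_poly, scal, px, py, pz. simpl. ring. Qed.

Lemma inH4_scal : forall f t v, in_H 4 f -> f (scal t v) = t ^ 4 * f v.
Proof. intros f t v [c Hc]. rewrite !Hc. apply hom4_scal. Qed.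

Lemma inH2_scal : forall f t v, in_H 2 f -> f (scal t v) = t ^ 2 * f v.
Proof. intros f t v [c Hc]. rewrite !Hc. apply hom2_scal. Qed.

Lemma hom_lin : forall k c d a v, hom_poly k (fun i j => a * c i j + d i j) v = a * hom_poly k c v + hom_poly k d v.
Proof.
  intros. unfold hom_poly. rewrite sum_scal, <- sum_plus. apply sum_ext. intros i _.
  rewrite sum_scal, <- sum_plus. apply sum_ext. intros j _. ring.
Qed.

Lemma hom2_exp : forall c x y z, hom_poly 2 c (x, y, z) =
  c 0%nat 0%nat * z^2 + c 0%nat 1%nat * y * z + c 0%nat 2%nat * y^2 + c 1%nat 0%nat * x * z
  + c 1%nat 1%nat * x * y + c 2%nat 0%nat * x^2.
Proof. intros. unfold hom_poly, px, py, pz. simpl. ring. Qed.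

(** * Continuity of forms. *)

Definition near (d : R) (x t : Pt) : Prop :=
  Rabs (px x - px t) < d /\ Rabs (py x - py t) < d /\ Rabs (pz x - pz t) < d.

Definition cont (f : form) : Prop :=
  forall t eps, 0 < eps -> exists d, 0 < d /\ forall x, near d x t -> Rabs (f x - f t) < eps.

Lemma near_mono : forall d d' x t, d <= d' -> near d x t -> near d' x t.
Proof. unfold near; intros; lra. Qed.

Lemma cont_const : forall a, cont (fun _ => a).
Proof. intros a t eps He. exists 1. split. lra. intros. rewrite Rminus_diag, Rabs_R0. auto. Qed.

Lemma cont_px : cont px.
Proof. intros t eps He. exists eps. split; auto. intros x [H _]; auto. Qed.

Lemma cont_py : cont py.
Proof. intros t eps He. exists eps. split; auto. intros x [_ [H _]]; auto. Qed.

Lemma cont_pz : cont pz.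
Proof. intros t eps He. exists eps. split; auto. intros x [_ [_ H]]; auto. Qed.

Lemma cont_ext : forall f g, (forall v, f v = g v) -> cont f -> cont g.
Proof. intros f g H Hf t eps He. destruct (Hf t eps He) as [d [Hd H']]. exists d. split; auto.
  intros. rewrite <- !H. auto. Qed.

Lemma cont_add : forall f g, cont f -> cont g -> cont (fun v => f v + g v).
Proof.
  intros f g Hf Hg t eps He.
  destruct (Hf t (eps/2)) as [d1 [Hd1 H1]]. lra.
  destruct (Hg t (eps/2)) as [d2 [Hd2 H2]]. lra.
  exists (Rmin d1 d2). split. apply Rmin_pos; auto.
  intros x Hx. specialize (H1 x (near_mono _ _ _ _ (Rmin_l _ _) Hx)).
  specialize (H2 x (near_mono _ _ _ _ (Rmin_r _ _) Hx)).
  replace (f x + g x - (f t + g t)) with ((f x - f t) + (g x - g t)) by ring.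
  eapply Rle_lt_trans. apply Rabs_triang. lra.
Qed.

Lemma cont_mul : forall f g, cont f -> cont g -> cont (fun v => f v * g v).
Proof.
  intros f g Hf Hg t eps He.
  set (A := Rabs (f t)). set (B := Rabs (g t)).
  assert (HA : 0 <= A) by apply Rabs_pos. assert (HB : 0 <= B) by apply Rabs_pos.
  set (e1 := eps / (2 * (B + 1))).
  set (e2 := Rmin 1 (eps / (2 * (A + 1)))).
  assert (He1 : 0 < e1) by (unfold e1; apply Rdiv_lt_0_compat; lra).
  assert (He2 : 0 < e2) by (unfold e2; apply Rmin_pos; [lra| apply Rdiv_lt_0_compat; lra]).
  destruct (Hf t e1 He1) as [d1 [Hd1 H1]].
  destruct (Hg t e2 He2) as [d2 [Hd2 H2]].
  exists (Rmin d1 d2). split. apply Rmin_pos; auto.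
  intros x Hx. specialize (H1 x (near_mono _ _ _ _ (Rmin_l _ _) Hx)).
  specialize (H2 x (near_mono _ _ _ _ (Rmin_r _ _) Hx)).
  replace (f x * g x - f t * g t) with ((f x - f t) * g x + f t * (g x - g t)) by ring.
  eapply Rle_lt_trans. apply Rabs_triang. rewrite !Rabs_mult.
  assert (Hgx : Rabs (g x) <= B + 1).
  { replace (g x) with (g t + (g x - g t)) by ring. eapply Rle_trans. apply Rabs_triang.
    unfold B. assert (e2 <= 1) by apply Rmin_l. lra. }
  assert (E1 : Rabs (f x - f t) * Rabs (g x) <= e1 * (B + 1)).
  { apply Rmult_le_compat; try apply Rabs_pos; lra. }
  assert (E1' : e1 * (B + 1) = eps / 2) by (unfold e1; field; lra).
  assert (E2 : A * Rabs (g x - g t) <= A * e2).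
  { apply Rmult_le_compat_l; lra. }
  assert (E2' : A * e2 < eps / 2).
  { assert (e2 <= eps / (2 * (A + 1))) by apply Rmin_r.
    apply Rle_lt_trans with (A * (eps / (2 * (A + 1)))).
    apply Rmult_le_compat_l; lra.
    apply Rlt_le_trans with ((A + 1) * (eps / (2 * (A + 1)))).
    apply Rmult_lt_compat_r. apply Rdiv_lt_0_compat; lra. lra.
    right. field. lra. }
  fold A. lra.
Qed.

Lemma cont_pow : forall f n, cont f -> cont (fun v => f v ^ n).
Proof.
  intros f n Hf; induction n.
  - apply (cont_ext (fun _ => 1)). intro; simpl; ring. apply cont_const.
  - apply (cont_ext (fun v => f v * f v ^ n)). intro; simpl; ring. apply cont_mul; auto.
Qed.

Lemma cont_sum : forall (F : nat -> form) N, (forall i, (i <= N)%nat -> cont (F i)) ->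
  cont (fun v => sum_f_R0 (fun i => F i v) N).
Proof.
  intros F N; induction N; intros H; simpl.
  - apply H; lia.
  - apply cont_add. apply IHN; intros; apply H; lia. apply H; lia.
Qed.

Lemma cont_inH : forall k f, in_H k f -> cont f.
Proof.
  intros k f [c Hc]. apply (cont_ext (fun v => hom_poly k c v)). intro; auto.
  unfold hom_poly. apply cont_sum. intros i _. apply cont_sum. intros j _.
  apply cont_mul; [apply cont_mul; [apply cont_mul|]|].
  apply cont_const. apply cont_pow, cont_px. apply cont_pow, cont_py. apply cont_pow, cont_pz.
Qed.

Lemma cont_dot : forall r, cont (fun v => dot r v).
Proof. intros. eapply cont_inH. apply inH_lin. Qed.

Lemma lincomb_cons : forall c cs q qs v, lincomb (c :: cs) (q :: qs) v = c * q v + lincomb cs qs v.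
Proof. reflexivity. Qed.

Lemma sumsq_cons : forall q qs v, sumsq (q :: qs) v = q v * q v + sumsq qs v.
Proof. reflexivity. Qed.

Lemma sumsq_nonneg : forall qs v, 0 <= sumsq qs v.
Proof. induction qs; intro v. simpl; lra. rewrite sumsq_cons. pose proof (IHqs v). nra. Qed.

Definition sqsum (cs : list R) : R := fold_right (fun c a => c * c + a) 0 cs.

Lemma sqsum_nonneg : forall cs, 0 <= sqsum cs.
Proof. induction cs; simpl; nra. Qed.

Lemma le_of_sq : forall u P, 0 <= P -> u * u <= P * P -> u <= P.
Proof. intros. destruct (Rle_dec u P); auto. exfalso. assert (P * P < u * u) by (apply Rmult_le_0_lt_compat; lra). lra. Qed.

Lemma cs_step : forall a x B A S, 0 <= A -> 0 <= S -> B * B <= A * S ->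
  (a * x + B) * (a * x + B) <= (a * a + A) * (x * x + S).
Proof.
  intros a x B A S HA HS HB.
  assert (P1 : 0 <= a*a*S) by (apply Rmult_le_pos; [apply Rle_0_sqr|auto]).
  assert (P2 : 0 <= A*(x*x)) by (apply Rmult_le_pos; [auto|apply Rle_0_sqr]).
  set (P := a*a*S + A*(x*x)).
  assert (HP : 0 <= P) by (unfold P; lra).
  assert (Q : (2*a*x*B)*(2*a*x*B) <= P * P).
  { assert (E : P * P - (2*a*x*B)*(2*a*x*B) = (a*a*S - A*(x*x))*(a*a*S - A*(x*x)) + 4*((a*x)*(a*x))*(A*S - B*B)) by (unfold P; ring).
    assert (0 <= (a*a*S - A*(x*x))*(a*a*S - A*(x*x))) by apply Rle_0_sqr.
    assert (0 <= 4*((a*x)*(a*x))*(A*S - B*B)) by (apply Rmult_le_pos; [pose proof (Rle_0_sqr (a*x)); unfold Rsqr in *; lra|lra]).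
    lra. }
  pose proof (le_of_sq _ _ HP Q).
  replace ((a * a + A) * (x * x + S)) with (a*a*(x*x) + P + A*S) by (unfold P; ring).
  replace ((a * x + B) * (a * x + B)) with (a*a*(x*x) + 2*a*x*B + B*B) by ring. lra.
Qed.

Lemma cauchy_schwarz : forall cs qs v, length cs = length qs ->
  lincomb cs qs v * lincomb cs qs v <= sqsum cs * sumsq qs v.
Proof.
  induction cs as [|c cs IH]; intros [|q qs] v Hl; simpl in Hl; try discriminate.
  - unfold lincomb, sqsum, sumsq; simpl; lra.
  - rewrite lincomb_cons, sumsq_cons. simpl sqsum.
    apply cs_step. apply sqsum_nonneg. apply sumsq_nonneg. apply IH. lia.
Qed.

Lemma sumsq_zero : forall qs v, sumsq qs v = 0 -> forall q, In q qs -> q v = 0.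
Proof.
  induction qs as [|q0 qs IH]; intros v H q Hq; simpl in Hq; [tauto|].
  rewrite sumsq_cons in H. pose proof (sumsq_nonneg qs v).
  destruct Hq as [<-|Hq]. nra. apply IH; auto. nra.
Qed.

Lemma lincomb_zero : forall cs qs v, (forall q, In q qs -> q v = 0) -> lincomb cs qs v = 0.
Proof.
  induction cs as [|c cs IH]; intros [|q qs] v H; try reflexivity.
  rewrite lincomb_cons, IH, (H q); simpl; auto. ring. intros; apply H; simpl; auto.
Qed.

Lemma lincomb_inH : forall k cs qs, (forall q, In q qs -> in_H k q) -> in_H k (lincomb cs qs).
Proof.
  induction cs as [|c cs IH]; intros [|q qs] H.
  1-3: apply (inH_ext _ (fun _ => 0)); [intro; reflexivity|apply inH_zero].
  apply (inH_ext _ (fun v => c * q v + lincomb cs qs v)); [intro; reflexivity|].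
  apply inH_add. apply inH_scal, H; simpl; auto. apply IH. intros; apply H; simpl; auto.
Qed.

Lemma sumsq_inH : forall qs, (forall q, In q qs -> in_H 4 (fun v => q v * q v)) -> in_H 4 (sumsq qs).
Proof.
  induction qs as [|q qs IH]; intros H.
  - apply (inH_ext _ (fun _ => 0)); [intro; reflexivity|apply inH_zero].
  - apply (inH_ext _ (fun v => q v * q v + sumsq qs v)); [intro; reflexivity|].
    apply inH_add. apply H; simpl; auto. apply IH. intros; apply H; simpl; auto.
Qed.

Lemma lincomb_coeffs : forall (Z : (nat -> nat -> R) -> Prop) M cs qs,
  Z (fun _ _ => 0) -> (forall a c d, Z c -> Z d -> Z (fun i j => a * c i j + d i j)) ->
  (forall q, In q qs -> exists c, local_coeffs 4 M q c /\ Z c) ->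
  exists c, local_coeffs 4 M (lincomb cs qs) c /\ Z c.
Proof.
  intros Z M cs. induction cs as [|a cs IH]; intros [|q qs] Z0 Zc Hq.
  1-3: exists (fun _ _ => 0); split; auto; intro v; unfold lincomb; simpl; unfold hom_poly;
       symmetry; apply sum_zero; intros; apply sum_zero; intros; ring.
  destruct (Hq q) as [c [Hc Zq]]. simpl; auto.
  destruct (IH qs Z0 Zc) as [d [Hd Zd]]. intros; apply Hq; simpl; auto.
  exists (fun i j => a * c i j + d i j). split; auto.
  intro v. rewrite lincomb_cons, hom_lin, Hc, Hd. reflexivity.
Qed.

(** * J is finite dimensional, so it has a finite spanning family. *)

Fixpoint sumn (F : nat -> R) (m : nat) : R :=
  match m with O => 0 | S m' => sumn F m' + F m' end.

Lemma sumn_ext : forall F G m, (forall i, (i < m)%nat -> F i = G i) -> sumn F m = sumn G m.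
Proof. intros F G m; induction m; intros H; simpl. reflexivity. rewrite IHm. rewrite H. reflexivity. lia. intros; apply H; lia. Qed.

Lemma sumn_shift : forall F m, sumn F (S m) = F 0%nat + sumn (fun i => F (S i)) m.
Proof. intros F m; induction m. simpl. ring. change (sumn F (S (S m))) with (sumn F (S m) + F (S m)). rewrite IHm. simpl. ring. Qed.

Lemma sumn_zero : forall m, sumn (fun _ => 0) m = 0.
Proof. induction m; simpl. reflexivity. rewrite IHm. ring. Qed.

Lemma sumn_plus : forall F G m, sumn (fun i => F i + G i) m = sumn F m + sumn G m.
Proof. intros F G m; induction m; simpl. ring. rewrite IHm. ring. Qed.

Lemma sumn_scal : forall F a m, sumn (fun i => a * F i) m = a * sumn F m.
Proof. intros F a m; induction m; simpl. ring. rewrite IHm. ring. Qed.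

Definition skip (j i : nat) : nat := if (i <? j)%nat then i else S i.

Lemma sum_skip : forall F m j, (j < m)%nat -> sumn F m = F j + sumn (fun i => F (skip j i)) (m - 1).
Proof.
  intros F m; induction m; intros j Hj. lia.
  destruct (Nat.eq_dec j m) as [->|Hne].
  - simpl. replace (m - 0)%nat with m by lia.
    rewrite (sumn_ext (fun i => F (skip m i)) F). ring.
    intros i Hi. unfold skip. destruct (Nat.ltb_spec i m); [reflexivity|lia].
  - change (sumn F (S m)) with (sumn F m + F m). rewrite (IHm j) by lia.
    replace (S m - 1)%nat with (S (m - 1)) by lia.
    change (sumn (fun i => F (skip j i)) (S (m - 1))) with (sumn (fun i => F (skip j i)) (m - 1) + F (skip j (m - 1))).
    assert (E : skip j (m - 1) = m) by (unfold skip; destruct (Nat.ltb_spec (m - 1) j); lia).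
    rewrite E. ring.
Qed.

(* m > n vectors of R^n are linearly dependent (Gaussian elimination). *)
Lemma more_vectors_dependent : forall n m (v : nat -> nat -> R), (n < m)%nat ->
  exists c : nat -> R, (exists i, (i < m)%nat /\ c i <> 0) /\
    forall k, (k < n)%nat -> sumn (fun i => c i * v i k) m = 0.
Proof.
  induction n as [|n IH]; intros m v Hm.
  - exists (fun i => if (i =? 0)%nat then 1 else 0). split.
    exists 0%nat. split. lia. simpl. lra. intros; lia.
  - destruct (classic (exists j, (j < m)%nat /\ v j n <> 0)) as [[j [Hj Hv]]|Hall].
    + set (w := fun i k => v (skip j i) k - (v (skip j i) n / v j n) * v j k).
      destruct (IH (m - 1)%nat w ltac:(lia)) as [d [[i0 [Hi0 Hd0]] Hd]].
      set (cj := - sumn (fun i => d i * v (skip j i) n) (m - 1) / v j n).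
      set (c := fun x => if (x =? j)%nat then cj else if (x <? j)%nat then d x else d (x - 1)%nat).
      assert (Hcs : forall i, c (skip j i) = d i).
      { intro i. unfold c, skip. destruct (Nat.ltb_spec i j).
        - destruct (Nat.eqb_spec i j); [lia|]. destruct (Nat.ltb_spec i j); [reflexivity|lia].
        - destruct (Nat.eqb_spec (S i) j); [lia|]. destruct (Nat.ltb_spec (S i) j); [lia|]. f_equal; lia. }
      assert (Hcj : c j = cj) by (unfold c; rewrite Nat.eqb_refl; reflexivity).
      exists c. split.
      * exists (skip j i0). split. unfold skip; destruct (Nat.ltb_spec i0 j); lia. rewrite Hcs. auto.
      * intros k Hk. rewrite (sum_skip _ m j Hj). rewrite Hcj.
        rewrite (sumn_ext _ (fun i => d i * v (skip j i) k)) by (intros; rewrite Hcs; reflexivity).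
        destruct (Nat.lt_ge_cases k n) as [Hkn|Hkn].
        -- specialize (Hd k Hkn). unfold w in Hd.
           rewrite (sumn_ext _ (fun i => d i * v (skip j i) k + (- (v j k / v j n)) * (d i * v (skip j i) n))) in Hd
             by (intros; field; auto).
           rewrite sumn_plus, sumn_scal in Hd. unfold cj. rewrite <- Hd. field. auto.
        -- replace k with n by lia. unfold cj. field. auto.
    + destruct (IH m v ltac:(lia)) as [c [Hc Hk]]. exists c. split; auto.
      intros k Hk'. destruct (Nat.lt_ge_cases k n). auto.
      replace k with n by lia. rewrite (sumn_ext _ (fun _ => 0)). apply sumn_zero.
      intros i Hi. assert (v i n = 0) by (apply NNPP; intro; apply Hall; exists i; auto). rewrite H0. ring.
Qed.

Lemma lincomb_seq : forall qs (c : nat -> R) s v,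
  lincomb (map c (seq s (length qs))) qs v = sumn (fun i => c (s + i)%nat * nth i qs (fun _ => 0) v) (length qs).
Proof.
  induction qs as [|q qs IH]; intros c s v. reflexivity.
  simpl length. simpl seq. simpl map. rewrite lincomb_cons, IH, sumn_shift.
  simpl nth. replace (s + 0)%nat with s by lia. f_equal.
  apply sumn_ext. intros i _. replace (S s + i)%nat with (s + S i)%nat by lia. reflexivity.
Qed.

Definition lin_indep (qs : list form) : Prop :=
  forall cs, length cs = length qs -> lincomb cs qs = (fun _ => 0) -> forall a, In a cs -> a = 0.

Lemma lincomb_scal_map : forall cs qs k v, lincomb (map (fun a => k * a) cs) qs v = k * lincomb cs qs v.
Proof.
  induction cs as [|c cs IH]; intros [|q qs] k v; simpl map; try (unfold lincomb; simpl; ring).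
  rewrite !lincomb_cons, IH. ring.
Qed.

Definition spans (J : form -> Prop) (qs : list form) : Prop :=
  (forall q, In q qs -> J q) /\
  (forall q, J q -> exists cs, length cs = length qs /\ q = lincomb cs qs).

Lemma basis_spans : forall J qs, is_basis J qs -> spans J qs.
Proof. intros J qs [H1 [_ H3]]. split; auto. Qed.

Lemma basis_J : forall J qs q, spans J qs -> In q qs -> J q.
Proof. intros J qs q [H _] Hq. auto. Qed.

Lemma spanning_or_independent : forall J, lin_subspace 2 J -> forall n,
  (exists qs, spans J qs) \/ (exists qs, (forall q, In q qs -> J q) /\ length qs = n /\ lin_indep qs).
Proof.
  intros J HJ n. induction n as [|n IH].
  - right. exists nil. split. intros q []. split. reflexivity. intros [|a cs] Hl _ b Hb; simpl in *; [contradiction|discriminate].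
  - destruct IH as [IH|[qs [HqJ [Hlen Hind]]]]; [left; auto|].
    destruct (classic (forall q, J q -> exists cs, length cs = length qs /\ q = lincomb cs qs)) as [Hsp|Hnsp].
    + left. exists qs. split; auto.
    + right. apply not_all_ex_not in Hnsp. destruct Hnsp as [q Hq]. apply imply_to_and in Hq. destruct Hq as [HqJ' Hq].
      exists (q :: qs). split. intros q' [<-|Hq']; auto. split. simpl; lia.
      intros [|c cs] Hl Hz a Ha. simpl in Hl; discriminate.
      simpl in Hl. injection Hl as Hl.
      destruct (Req_dec c 0) as [Hc|Hc].
      * assert (Hz' : lincomb cs qs = (fun _ => 0)).
        { apply functional_extensionality. intro v. pose proof (equal_f Hz v) as E. simpl in E.
          rewrite lincomb_cons, Hc in E. lra. }
        destruct Ha as [<-|Ha]; auto. apply (Hind cs); auto.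
      * exfalso. apply Hq. exists (map (fun a => - / c * a) cs). split. rewrite length_map. auto.
        apply functional_extensionality. intro v. rewrite lincomb_scal_map.
        pose proof (equal_f Hz v) as E. simpl in E. rewrite lincomb_cons in E.
        apply (Rmult_eq_reg_l c); auto. field_simplify; auto. lra.
Qed.

(* Six points on which a quadric is determined. *)
Definition six_points (k : nat) : Pt :=
  match k with
  | 0 => (1, 0, 0) | 1 => (0, 1, 0) | 2 => (0, 0, 1)
  | 3 => (1, 1, 0) | 4 => (1, 0, 1) | _ => (0, 1, 1) end.

Lemma quadric_zero : forall g, in_H 2 g -> (forall k, (k < 6)%nat -> g (six_points k) = 0) -> forall v, g v = 0.
Proof.
  intros g [c Hc] H [[x y] z].
  pose proof (H 0%nat ltac:(lia)) as E0. pose proof (H 1%nat ltac:(lia)) as E1.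
  pose proof (H 2%nat ltac:(lia)) as E2. pose proof (H 3%nat ltac:(lia)) as E3.
  pose proof (H 4%nat ltac:(lia)) as E4. pose proof (H 5%nat ltac:(lia)) as E5.
  simpl in E0, E1, E2, E3, E4, E5. rewrite !Hc, !hom2_exp in *.
  assert (c 2%nat 0%nat = 0) by lra. assert (c 0%nat 2%nat = 0) by lra. assert (c 0%nat 0%nat = 0) by lra.
  assert (c 1%nat 1%nat = 0) by lra. assert (c 1%nat 0%nat = 0) by lra. assert (c 0%nat 1%nat = 0) by lra.
  rewrite H0, H1, H2, H3, H4, H5. ring.
Qed.

(* Seven quadrics are linearly dependent (dim H_2 = 6). *)
Lemma no_seven_independent : forall qs, (forall q, In q qs -> in_H 2 q) -> length qs = 7%nat -> ~ lin_indep qs.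
Proof.
  intros qs HqH Hlen Hind.
  destruct (more_vectors_dependent 6 7 (fun i k => nth i qs (fun _ => 0) (six_points k)) ltac:(lia)) as [c [[i [Hi Hci]] Hc]].
  set (cs := map c (seq 0 (length qs))).
  assert (Hg : lincomb cs qs = (fun _ => 0)).
  { apply functional_extensionality. apply quadric_zero.
    apply lincomb_inH; auto.
    intros k Hk. unfold cs. rewrite lincomb_seq, Hlen. simpl plus. apply Hc; auto. }
  apply Hci. apply (Hind cs); auto. unfold cs. rewrite length_map, length_seq. reflexivity.
  unfold cs. apply in_map. apply in_seq. lia.
Qed.

Lemma span_exists : forall J, lin_subspace 2 J -> exists qs, spans J qs.
Proof.
  intros J HJ. destruct (spanning_or_independent J HJ 7) as [H|[qs [HqJ [Hlen Hind]]]]; auto.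
  exfalso. apply (no_seven_independent qs); auto. intros q Hq. apply HJ. auto.
Qed.

(** * Local coefficients of nonnegative quartics at a zero. *)

(* If a x + x^2 W(x) >= 0 near 0 with W bounded, then a = 0
   (a nonnegative function has no linear term at a zero). *)
Lemma poly_lin : forall (a D : R) (W : R -> R),
  (forall x, Rabs x <= 1 -> Rabs (W x) <= D) ->
  (forall x, x <> 0 -> Rabs x <= 1 -> 0 <= a * x + x ^ 2 * W x) -> a = 0.
Proof.
  intros a D W HW H. destruct (Req_dec a 0) as [|Ha]; auto. exfalso.
  assert (HD : 0 <= D) by (specialize (HW 0); rewrite Rabs_R0 in HW;
     pose proof (Rabs_pos (W 0)); lra).
  pose proof (Rabs_pos a) as Hpa.
  assert (Hpa' : 0 < Rabs a) by (apply Rabs_pos_lt; auto).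
  assert (Ha2 : 0 < a * a) by (apply Rsqr_pos_lt; auto).
  set (K := (1 + Rabs a) * (D + 1)).
  assert (HK : 1 <= K) by (unfold K; nra).
  set (s := / K).
  assert (Hs : 0 < s) by (unfold s; apply Rinv_0_lt_compat; lra).
  assert (HsK : s * K = 1) by (unfold s; field; lra).
  set (x := - a * s).
  assert (Hx : Rabs x = Rabs a * s).
  { unfold x. rewrite Rabs_mult, Rabs_Ropp, (Rabs_right s); lra. }
  assert (Hx1 : Rabs x <= 1) by (rewrite Hx; unfold K in HsK; nra).
  assert (Hx0 : x <> 0) by (intro E; rewrite E, Rabs_R0 in Hx; nra).
  specialize (H x Hx0 Hx1). specialize (HW x Hx1).
  assert (Wle : W x <= D) by (pose proof (Rle_abs (W x)); lra).
  assert (x ^ 2 * W x <= x ^ 2 * D) by (apply Rmult_le_compat_l; [nra|lra]).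
  assert (Ea : a * x = - (a * a) * s) by (unfold x; ring).
  assert (Ex : x ^ 2 = (a * a) * s * s) by (unfold x; ring).
  assert (HsD : s * D < 1) by (unfold K in HsK; nra).
  assert ((a * a) * s * (s * D) < (a * a) * s * 1) by (apply Rmult_lt_compat_l; nra).
  nra.
Qed.

Lemma poly_quad : forall (a D : R) (W : R -> R),
  (forall x, Rabs x <= 1 -> Rabs (W x) <= D) ->
  (forall x, x <> 0 -> Rabs x <= 1 -> 0 <= x ^ 2 * (a + x * W x)) -> 0 <= a.
Proof.
  intros a D W HW H. destruct (Rle_lt_dec 0 a) as [|Ha]; auto. exfalso.
  assert (HD : 0 <= D) by (specialize (HW 0); rewrite Rabs_R0 in HW;
     pose proof (Rabs_pos (W 0)); lra).
  set (K := (1 - a) * (D + 1)).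
  assert (HK : 1 <= K) by (unfold K; nra).
  set (x := - a / K).
  assert (Hx : 0 < x) by (unfold x; apply Rdiv_lt_0_compat; lra).
  assert (HxK : x * K = - a) by (unfold x; field; lra).
  assert (Hx1 : Rabs x <= 1).
  { rewrite Rabs_right by lra. destruct (Rle_dec x 1) as [|Hn]; auto.
    assert (K >= 1 - a) by (unfold K; nra).
    assert (x * K >= x * (1 - a)) by (apply Rmult_ge_compat_l; lra). nra. }
  specialize (H x ltac:(lra) Hx1). specialize (HW x Hx1).
  assert (Wle : Rabs (x * W x) <= x * D).
  { rewrite Rabs_mult, Rabs_right by lra. apply Rmult_le_compat_l; lra. }
  assert (x * W x <= x * D) by (pose proof (Rle_abs (x * W x)); lra).
  assert (x * D < - a) by (unfold K in HxK; nra).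
  assert (a + x * W x < 0) by lra.
  assert (0 < x ^ 2) by (simpl; nra).
  nra.
Qed.

Lemma abs_bound2 : forall u v x, Rabs x <= 1 -> Rabs (u + x * v) <= Rabs u + Rabs v.
Proof.
  intros. eapply Rle_trans. apply Rabs_triang. rewrite Rabs_mult.
  pose proof (Rabs_pos v). pose proof (Rabs_pos x). nra.
Qed.

Lemma abs_bound3 : forall b c d x, Rabs x <= 1 ->
  Rabs (b + c * x + d * x ^ 2) <= Rabs b + Rabs c + Rabs d.
Proof.
  intros. replace (b + c * x + d * x ^ 2) with (b + x * (c + x * d)) by ring.
  eapply Rle_trans. apply abs_bound2; auto.
  pose proof (abs_bound2 c d x H). lra.
Qed.

Lemma hom4_x : forall c x, hom_poly 4 c (x, 0, 1) =
  c 0%nat 0%nat + c 1%nat 0%nat * x + c 2%nat 0%nat * x ^ 2 + c 3%nat 0%nat * x ^ 3 + c 4%nat 0%nat * x ^ 4.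
Proof. intros. unfold hom_poly, px, py, pz. simpl. ring. Qed.

Lemma hom4_y : forall c y, hom_poly 4 c (0, y, 1) =
  c 0%nat 0%nat + c 0%nat 1%nat * y + c 0%nat 2%nat * y ^ 2 + c 0%nat 3%nat * y ^ 3 + c 0%nat 4%nat * y ^ 4.
Proof. intros. unfold hom_poly, px, py, pz. simpl. ring. Qed.

Lemma hom4_0 : forall c, hom_poly 4 c (0, 0, 1) = c 0%nat 0%nat.
Proof. intros. unfold hom_poly, px, py, pz. simpl. ring. Qed.

Lemma hom4_xy : forall c x y, hom_poly 4 c (x, y, 1) =
  c 0%nat 0%nat + c 1%nat 0%nat * x + c 0%nat 1%nat * y + c 2%nat 0%nat * x^2 + c 1%nat 1%nat * x * y + c 0%nat 2%nat * y ^ 2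
  + c 3%nat 0%nat * x^3 + c 2%nat 1%nat * x^2 * y + c 1%nat 2%nat * x * y^2 + c 0%nat 3%nat * y^3
  + c 4%nat 0%nat * x^4 + c 3%nat 1%nat * x^3 * y + c 2%nat 2%nat * x^2 * y^2 + c 1%nat 3%nat * x * y^3 + c 0%nat 4%nat * y^4.
Proof. intros. unfold hom_poly, px, py, pz. simpl. ring. Qed.

Lemma ftilde00 : forall c, ftilde c 0 0 = c 2%nat 0%nat.
Proof. intros. unfold ftilde. simpl. ring. Qed.

Lemma centered_val : forall M p, centered M p -> exists t, t <> 0 /\ mat_apply M (0,0,1) = scal t p.
Proof. intros M p [_ [t [Ht E]]]. exists t; auto. Qed.

Lemma low_coeffs_unique : forall c c', (forall v, hom_poly 4 c v = hom_poly 4 c' v) ->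
  c 0%nat 0%nat = c' 0%nat 0%nat /\ c 1%nat 0%nat = c' 1%nat 0%nat /\ c 0%nat 1%nat = c' 0%nat 1%nat /\
  c 2%nat 0%nat = c' 2%nat 0%nat /\ c 1%nat 1%nat = c' 1%nat 1%nat /\ c 3%nat 0%nat = c' 3%nat 0%nat.
Proof.
  intros c c' H.
  pose proof (H (0,0,1)) as E00.
  pose proof (H (1,0,1)) as E10. pose proof (H (-1,0,1)) as E10'.
  pose proof (H (2,0,1)) as E20. pose proof (H (-2,0,1)) as E20'.
  pose proof (H (0,1,1)) as E01. pose proof (H (0,-1,1)) as E01'.
  pose proof (H (0,2,1)) as E02. pose proof (H (0,-2,1)) as E02'.
  pose proof (H (1,1,1)) as F1. pose proof (H (1,-1,1)) as F2.
  pose proof (H (-1,1,1)) as F3. pose proof (H (-1,-1,1)) as F4.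
  pose proof (H (2,1,1)) as G1. pose proof (H (2,-1,1)) as G2.
  pose proof (H (-2,1,1)) as G3. pose proof (H (-2,-1,1)) as G4.
  pose proof (H (1,2,1)) as K1. pose proof (H (1,-2,1)) as K2.
  pose proof (H (-1,2,1)) as K3. pose proof (H (-1,-2,1)) as K4.
  rewrite !hom4_xy in *. simpl in *.
  repeat split; lra.
Qed.

(* A nonnegative quartic vanishing at p has order >= 2 at p: F_s is contained in I_s. *)
Lemma nonneg_ord2 : forall f p M c, in_H 4 f -> (forall v, 0 <= f v) -> f p = 0 ->
  centered M p -> local_coeffs 4 M f c ->
  c 0%nat 0%nat = 0 /\ c 1%nat 0%nat = 0 /\ c 0%nat 1%nat = 0.
Proof.
  intros f p M c Hf Hpos Hp Hc Hl.
  assert (H0 : c 0%nat 0%nat = 0).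
  { rewrite <- hom4_0, <- Hl. destruct (centered_val _ _ Hc) as [t [_ E]].
    rewrite E, inH4_scal, Hp by auto. ring. }
  split; auto. split.
  - apply (poly_lin _ (Rabs (c 2%nat 0%nat) + Rabs (c 3%nat 0%nat) + Rabs (c 4%nat 0%nat))
       (fun x => c 2%nat 0%nat + c 3%nat 0%nat * x + c 4%nat 0%nat * x ^ 2)).
    intros; apply abs_bound3; auto.
    intros x _ _. pose proof (Hpos (mat_apply M (x, 0, 1))). rewrite Hl, hom4_x, H0 in H.
    replace (c 1%nat 0%nat * x + x ^ 2 * (c 2%nat 0%nat + c 3%nat 0%nat * x + c 4%nat 0%nat * x ^ 2)) with
      (0 + c 1%nat 0%nat * x + c 2%nat 0%nat * x ^ 2 + c 3%nat 0%nat * x ^ 3 + c 4%nat 0%nat * x ^ 4) by ring. auto.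
  - apply (poly_lin _ (Rabs (c 0%nat 2%nat) + Rabs (c 0%nat 3%nat) + Rabs (c 0%nat 4%nat))
       (fun x => c 0%nat 2%nat + c 0%nat 3%nat * x + c 0%nat 4%nat * x ^ 2)).
    intros; apply abs_bound3; auto.
    intros x _ _. pose proof (Hpos (mat_apply M (0, x, 1))). rewrite Hl, hom4_y, H0 in H.
    replace (c 0%nat 1%nat * x + x ^ 2 * (c 0%nat 2%nat + c 0%nat 3%nat * x + c 0%nat 4%nat * x ^ 2)) with
      (0 + c 0%nat 1%nat * x + c 0%nat 2%nat * x ^ 2 + c 0%nat 3%nat * x ^ 3 + c 0%nat 4%nat * x ^ 4) by ring. auto.
Qed.

(* If moreover tilde f(0,0) = 0 then a_30 = a_11 = 0: F_(p,l) is contained in I_(p,l). *)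
Lemma nonneg_pl : forall f p M c, in_H 4 f -> (forall v, 0 <= f v) -> f p = 0 ->
  centered M p -> local_coeffs 4 M f c -> c 2%nat 0%nat = 0 ->
  c 3%nat 0%nat = 0 /\ c 1%nat 1%nat = 0.
Proof.
  intros f p M c Hf Hpos Hp Hc Hl H20.
  destruct (nonneg_ord2 f p M c Hf Hpos Hp Hc Hl) as [H00 [H10 H01]].
  assert (H30 : c 3%nat 0%nat = 0).
  { apply (poly_lin _ (Rabs (c 4%nat 0%nat)) (fun _ => c 4%nat 0%nat)).
    intros; lra.
    intros x Hx _. pose proof (Hpos (mat_apply M (x, 0, 1))). rewrite Hl, hom4_x, H00, H10, H20 in H.
    assert (0 < x ^ 2) by (simpl; nra).
    replace (0 + 0 * x + 0 * x ^ 2 + c 3%nat 0%nat * x ^ 3 + c 4%nat 0%nat * x ^ 4) with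
      (x ^ 2 * (c 3%nat 0%nat * x + x ^ 2 * c 4%nat 0%nat)) in H by ring. nra. }
  split; auto.
  apply (poly_lin _ (Rabs (c 0%nat 2%nat)) (fun _ => c 0%nat 2%nat)).
  intros; lra.
  intros mu _ _.
  set (u := c 2%nat 1%nat * mu + c 1%nat 2%nat * mu ^ 2 + c 0%nat 3%nat * mu ^ 3).
  set (v := c 4%nat 0%nat + c 3%nat 1%nat * mu + c 2%nat 2%nat * mu ^ 2 + c 1%nat 3%nat * mu ^ 3 + c 0%nat 4%nat * mu ^ 4).
  replace (c 1%nat 1%nat * mu + mu ^ 2 * c 0%nat 2%nat) with (c 1%nat 1%nat * mu + c 0%nat 2%nat * mu ^ 2) by ring.
  apply (poly_quad _ (Rabs u + Rabs v) (fun x => u + x * v)).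
  intros; apply abs_bound2; auto.
  intros x _ _. pose proof (Hpos (mat_apply M (x, mu * x, 1))). rewrite Hl, hom4_xy, H00, H10, H01, H20, H30 in H.
  unfold u, v. match goal with |- 0 <= ?e => replace e with (0 + 0 * x + 0 * (mu * x) + 0 * x ^ 2 + c 1%nat 1%nat * x * (mu * x) +
   c 0%nat 2%nat * (mu * x) ^ 2 + 0 * x ^ 3 + c 2%nat 1%nat * x ^ 2 * (mu * x) +
   c 1%nat 2%nat * x * (mu * x) ^ 2 + c 0%nat 3%nat * (mu * x) ^ 3 + c 4%nat 0%nat * x ^ 4 +
   c 3%nat 1%nat * x ^ 3 * (mu * x) + c 2%nat 2%nat * x ^ 2 * (mu * x) ^ 2 +
   c 1%nat 3%nat * x * (mu * x) ^ 3 + c 0%nat 4%nat * (mu * x) ^ 4) by ring end. auto.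
Qed.

Lemma ftilde_dom : forall g p M c K, in_H 4 g -> (forall v, 0 <= g v) -> g p = 0 ->
  centered M p -> local_coeffs 4 M g c ->
  (forall x, g (mat_apply M (x, 0, 1)) <= K * x ^ 4) -> c 2%nat 0%nat = 0.
Proof.
  intros g p M c K Hg Hpos Hp Hc Hl HK.
  destruct (nonneg_ord2 g p M c Hg Hpos Hp Hc Hl) as [H00 [H10 _]].
  assert (A : 0 <= c 2%nat 0%nat).
  { apply (poly_quad _ (Rabs (c 3%nat 0%nat) + Rabs (c 4%nat 0%nat)) (fun x => c 3%nat 0%nat + x * c 4%nat 0%nat)).
    intros; apply abs_bound2; auto.
    intros x _ _. pose proof (Hpos (mat_apply M (x, 0, 1))). rewrite Hl, hom4_x, H00, H10 in H.
    match goal with |- 0 <= ?e => replace e with (0 + 0 * x + c 2%nat 0%nat * x ^ 2 + c 3%nat 0%nat * x ^ 3 + c 4%nat 0%nat * x ^ 4) by ring end. auto. }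
  assert (B : 0 <= - c 2%nat 0%nat).
  { apply (poly_quad _ (Rabs (- c 3%nat 0%nat) + Rabs (K - c 4%nat 0%nat)) (fun x => - c 3%nat 0%nat + x * (K - c 4%nat 0%nat))).
    intros; apply abs_bound2; auto.
    intros x _ _. pose proof (HK x). rewrite Hl, hom4_x, H00, H10 in H.
    match goal with |- 0 <= ?e => replace e with (K * x ^ 4 - (0 + 0 * x + c 2%nat 0%nat * x ^ 2 + c 3%nat 0%nat * x ^ 3 + c 4%nat 0%nat * x ^ 4)) by ring end. lra. }
  lra.
Qed.

(** * Charts: linear coordinates adapted to a point and a line through it. *)

(* The matrix with columns a1, a2, a3. *)
Definition mkM (a1 a2 a3 : Pt) : Mat :=
  ((px a1, px a2, px a3), (py a1, py a2, py a3), (pz a1, pz a2, pz a3)).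

Lemma pt_eq : forall u v : Pt, px u = px v -> py u = py v -> pz u = pz v -> u = v.
Proof. intros [[a b] c] [[a' b'] c']. unfold px, py, pz; simpl. intros; subst; auto. Qed.

Lemma mkM_px : forall a1 a2 a3 v, px (mat_apply (mkM a1 a2 a3) v) = px v * px a1 + py v * px a2 + pz v * px a3.
Proof. intros. unfold mat_apply, mkM, dot, px, py, pz; simpl. ring. Qed.

Lemma mkM_py : forall a1 a2 a3 v, py (mat_apply (mkM a1 a2 a3) v) = px v * py a1 + py v * py a2 + pz v * py a3.
Proof. intros. unfold mat_apply, mkM, dot, px, py, pz; simpl. ring. Qed.

Lemma mkM_pz : forall a1 a2 a3 v, pz (mat_apply (mkM a1 a2 a3) v) = px v * pz a1 + py v * pz a2 + pz v * pz a3.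
Proof. intros. unfold mat_apply, mkM, dot, px, py, pz; simpl. ring. Qed.

Lemma det_mkM : forall a1 a2 a3, det (mkM a1 a2 a3) = dot a1 (cross a2 a3).
Proof. intros. unfold det, mkM, dot, cross, px, py, pz; simpl. ring. Qed.

(* Coordinates of v in the basis (a1, a2, a3) (Cramer's rule). *)
Definition winv (a1 a2 a3 v : Pt) : Pt :=
  let D := dot a1 (cross a2 a3) in
  (dot v (cross a2 a3) / D, dot v (cross a3 a1) / D, dot v (cross a1 a2) / D).

Lemma winv_spec : forall a1 a2 a3 v, dot a1 (cross a2 a3) <> 0 ->
  mat_apply (mkM a1 a2 a3) (winv a1 a2 a3 v) = v.
Proof.
  intros [[a b] c] [[d e] f] [[g h] i] [[x y] z] HD.
  apply pt_eq; [rewrite mkM_px|rewrite mkM_py|rewrite mkM_pz];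
  cbv [winv px py pz dot cross fst snd] in *; field; auto.
Qed.

Lemma winv_M : forall a1 a2 a3 w, dot a1 (cross a2 a3) <> 0 ->
  winv a1 a2 a3 (mat_apply (mkM a1 a2 a3) w) = w.
Proof.
  intros [[a b] c] [[d e] f] [[g h] i] [[x y] z] HD.
  unfold winv. apply pt_eq; rewrite ?mkM_px, ?mkM_py, ?mkM_pz;
  cbv [px py pz dot cross fst snd mat_apply mkM] in *; field; auto.
Qed.

Lemma winv_lin : forall a1 a2 a3 v, winv a1 a2 a3 v =
  (dot (scal (/ dot a1 (cross a2 a3)) (cross a2 a3)) v,
   dot (scal (/ dot a1 (cross a2 a3)) (cross a3 a1)) v,
   dot (scal (/ dot a1 (cross a2 a3)) (cross a1 a2)) v).
Proof. intros. unfold winv, scal, dot, px, py, pz; simpl. unfold Rdiv. f_equal; [f_equal|]; ring. Qed.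

Lemma cont_winv_x : forall a1 a2 a3, cont (fun v => px (winv a1 a2 a3 v)).
Proof. intros. eapply cont_ext; [|apply (cont_dot (scal (/ dot a1 (cross a2 a3)) (cross a2 a3)))].
  intro v. rewrite winv_lin. reflexivity. Qed.

Lemma cont_winv_y : forall a1 a2 a3, cont (fun v => py (winv a1 a2 a3 v)).
Proof. intros. eapply cont_ext; [|apply (cont_dot (scal (/ dot a1 (cross a2 a3)) (cross a3 a1)))].
  intro v. rewrite winv_lin. reflexivity. Qed.

Lemma cont_winv_z : forall a1 a2 a3, cont (fun v => pz (winv a1 a2 a3 v)).
Proof. intros. eapply cont_ext; [|apply (cont_dot (scal (/ dot a1 (cross a2 a3)) (cross a1 a2)))].
  intro v. rewrite winv_lin. reflexivity. Qed.

Lemma dot_pos : forall u, u <> pt0 -> 0 < dot u u.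
Proof.
  intros [[a b] c] H. unfold dot, px, py, pz; simpl.
  destruct (Req_dec a 0); destruct (Req_dec b 0); destruct (Req_dec c 0); subst;
  try (exfalso; apply H; reflexivity); nra.
Qed.

Lemma lagrange : forall u v, dot (cross u v) (cross u v) + dot u v * dot u v = dot u u * dot v v.
Proof. intros. unfold dot, cross, px, py, pz; simpl. ring. Qed.

(* The chart at p adapted to the line L: basis (L x p, L, p), so that l = {y = 0}. *)
Definition chartM (L p : Pt) : Mat := mkM (cross L p) L p.

Lemma chart_dot : forall L p v, dot L (mat_apply (chartM L p) v) = py v * dot L L + pz v * dot L p.
Proof.
  intros [[a b] c] [[d e] f] [[x y] z]. unfold chartM.
  unfold dot at 1. rewrite mkM_px, mkM_py, mkM_pz. cbv [px py pz dot cross fst snd]. ring.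
Qed.

Lemma chart_props : forall L p, L <> pt0 -> p <> pt0 -> dot L p = 0 ->
  0 < dot (cross L p) (cross L p) /\
  dot (cross L p) (cross L p) = dot (cross L p) (cross L p) /\
  mat_apply (chartM L p) (0, 0, 1) = p /\
  centered (chartM L p) p /\ adapted (chartM L p) L.
Proof.
  intros L p HL Hp HLp.
  pose proof (dot_pos L HL). pose proof (dot_pos p Hp). pose proof (lagrange L p) as Lg.
  rewrite HLp in Lg.
  assert (HD : 0 < dot (cross L p) (cross L p)) by nra.
  assert (Hd : det (chartM L p) = dot (cross L p) (cross L p)).
  { unfold chartM. rewrite det_mkM. unfold dot, cross, px, py, pz; simpl. ring. }
  assert (Ha3 : mat_apply (chartM L p) (0, 0, 1) = p).
  { apply pt_eq; unfold chartM; [rewrite mkM_px|rewrite mkM_py|rewrite mkM_pz]; unfold px, py, pz; simpl; ring. }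
  repeat split; auto.
  - rewrite Hd; lra.
  - exists 1. split. lra. rewrite Ha3. apply pt_eq; unfold scal, px, py, pz; simpl; ring.
  - intro Hv. unfold on_line in Hv.
    assert (E : dot L (mat_apply (chartM L p) v) = py v * dot L L).
    { rewrite (chart_dot L p v), HLp. ring. }
    rewrite E in Hv. nra.
  - intro Hv. unfold on_line.
    assert (E : dot L (mat_apply (chartM L p) v) = py v * dot L L).
    { rewrite (chart_dot L p v), HLp. ring. }
    rewrite E, Hv. ring.
Qed.

(* The cone { |x| <= eta |z|, |y| <= eta |z| } around the z-axis: in a chart
   centered at a point p, it is a neighbourhood of p with p itself removed. *)
Definition in_cone (eta : R) (w : Pt) : Prop :=
  Rabs (px w) <= eta * Rabs (pz w) /\ Rabs (py w) <= eta * Rabs (pz w).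

Lemma perp_exists : forall s, exists L, L <> pt0 /\ dot L s = 0.
Proof.
  intros [[a b] c].
  destruct (Req_dec a 0); destruct (Req_dec b 0).
  - exists (1, 0, 0). split. intro E; injection E; intros; lra. subst. unfold dot, px, py, pz; simpl; ring.
  - exists (b, -a, 0). split. intro E; injection E; intros; lra. unfold dot, px, py, pz; simpl; ring.
  - exists (b, -a, 0). split. intro E; injection E; intros; lra. unfold dot, px, py, pz; simpl; ring.
  - exists (b, -a, 0). split. intro E; injection E; intros; lra. unfold dot, px, py, pz; simpl; ring.
Qed.

Lemma vec_zero : forall g a1 a2 a3, dot g a1 = 0 -> dot g a2 = 0 -> dot g a3 = 0 ->
  dot a1 (cross a2 a3) <> 0 -> g = pt0.
Proof.
  intros [[x y] z] [[a b] c] [[d e] f] [[h i] j] H1 H2 H3 HD.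
  cbv [dot cross px py pz fst snd] in *.
  set (D := a * (e * j - f * i) + b * (f * h - d * j) + c * (d * i - e * h)) in *.
  assert (Ex : D * x = 0).
  { replace (D * x) with ((x * a + y * b + z * c) * (e * j - f * i) + (x * d + y * e + z * f) * (c * i - b * j) + (x * h + y * i + z * j) * (b * f - c * e)) by (unfold D; ring).
    rewrite H1, H2, H3. ring. }
  assert (Ey : D * y = 0).
  { replace (D * y) with ((x * a + y * b + z * c) * (f * h - d * j) + (x * d + y * e + z * f) * (a * j - c * h) + (x * h + y * i + z * j) * (c * d - a * f)) by (unfold D; ring).
    rewrite H1, H2, H3. ring. }
  assert (Ez : D * z = 0).
  { replace (D * z) with ((x * a + y * b + z * c) * (d * i - e * h) + (x * d + y * e + z * f) * (b * h - a * i) + (x * h + y * i + z * j) * (a * e - b * d)) by (unfold D; ring).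
    rewrite H1, H2, H3. ring. }
  unfold pt0. destruct (Rmult_integral _ _ Ex); [contradiction|].
  destruct (Rmult_integral _ _ Ey); [contradiction|].
  destruct (Rmult_integral _ _ Ez); [contradiction|]. subst. reflexivity.
Qed.

Lemma dot_comb : forall a b u w v,
  dot (a * px u + b * px w, a * py u + b * py w, a * pz u + b * pz w) v = a * dot u v + b * dot w v.
Proof. intros. cbv [dot px py pz fst snd]. ring. Qed.

Lemma not_proj : forall L p, dot (cross L p) (cross L p) > 0 -> ~ proj_eq p (cross L p).
Proof.
  intros L p H [t [_ E]]. rewrite E in H at 2.
  assert (dot (cross L p) (scal t p) = t * dot (cross L p) p) by (cbv [dot scal px py pz fst snd]; ring).
  assert (dot (cross L p) p = 0) by (cbv [dot cross px py pz fst snd]; ring). nra.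
Qed.

Lemma indep_in_basis : forall u w a1 a2 a3,
  (forall al be, (al * px u + be * px w, al * py u + be * py w, al * pz u + be * pz w) = pt0 ->
     al = 0 /\ be = 0) ->
  dot a1 (cross a2 a3) <> 0 -> dot u a3 = 0 -> dot w a3 = 0 ->
  dot u a1 * dot w a2 - dot u a2 * dot w a1 <> 0.
Proof.
  intros u w a1 a2 a3 Hind HD Hu Hw HP0.
  set (p := dot u a1) in *. set (q := dot u a2) in *.
  set (r := dot w a1) in *. set (t := dot w a2) in *.
  assert (Hab : exists al be, ~ (al = 0 /\ be = 0) /\ al * p + be * r = 0 /\ al * q + be * t = 0).
  { destruct (classic (r = 0 /\ p = 0)) as [[Hr Hp]|Hrp].
    - destruct (classic (t = 0 /\ q = 0)) as [[Ht Hq]|Htq].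
      + exists 1, 0. split. lra. rewrite Hr, Hp, Ht, Hq. split; ring.
      + exists t, (- q). split. intros [E1 E2]; apply Htq; split; lra. rewrite Hr, Hp. split; ring.
    - exists r, (- p). split. intros [E1 E2]; apply Hrp; split; lra. split. ring. lra. }
  destruct Hab as [al [be [Hne [E1 E2]]]].
  apply Hne, Hind, (vec_zero _ a1 a2 a3); try exact HD; rewrite dot_comb.
  - exact E1.
  - exact E2.
  - rewrite Hu, Hw. ring.
Qed.

(** * Quadrics: gradients, chart coefficients and squares. *)

Lemma derivable_quadratic : forall A B C x, derivable_pt_lim (fun t => A*t^2 + B*t + C) x (2*A*x + B).
Proof. intros.
  assert (H := derivable_pt_lim_plus _ _ x _ _
     (derivable_pt_lim_plus _ _ x _ _
        (derivable_pt_lim_mult _ _ x _ _ (derivable_pt_lim_const A x) (derivable_pt_lim_pow x 2))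
        (derivable_pt_lim_mult _ _ x _ _ (derivable_pt_lim_const B x) (derivable_pt_lim_id x)))
     (derivable_pt_lim_const C x)).
  replace (fun t => A*t^2 + B*t + C) with ((fct_cte A * (fun x => x ^ 2) + fct_cte B * id) + fct_cte C)%F.
  2:{ apply functional_extensionality; intro t. unfold plus_fct, mult_fct, fct_cte, id. ring. }
  replace (2*A*x + B) with (0 * x ^ 2 + fct_cte A x * (INR 2 * x ^ (2 - 1)) + (0 * id x + fct_cte B x * 1) + 0).
  auto. unfold fct_cte, id. simpl. ring.
Qed.

Definition grad2 (c : nat -> nat -> R) (v : Pt) : Pt :=
  (c 1%nat 0%nat * pz v + c 1%nat 1%nat * py v + 2 * c 2%nat 0%nat * px v,
   c 0%nat 1%nat * pz v + 2 * c 0%nat 2%nat * py v + c 1%nat 1%nat * px v,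
   2 * c 0%nat 0%nat * pz v + c 0%nat 1%nat * py v + c 1%nat 0%nat * px v).

Lemma grad_explicit : forall c q v g, (forall w, q w = hom_poly 2 c w) -> grad q v g -> g = grad2 c v.
Proof.
  intros c q [[x y] z] g Hq [Gx [Gy Gz]]. cbv [px py pz fst snd] in *.
  apply pt_eq.
  - eapply uniqueness_limite. apply Gx.
    replace (fun t => q (t, y, z)) with (fun t => c 2%nat 0%nat * t^2 + (c 1%nat 0%nat * z + c 1%nat 1%nat * y) * t
       + (c 0%nat 0%nat * z^2 + c 0%nat 1%nat * y * z + c 0%nat 2%nat * y^2)).
    2:{ apply functional_extensionality; intro t. rewrite Hq, hom2_exp. ring. }
    unfold grad2; cbv [px py pz fst snd].
    replace (c 1%nat 0%nat * z + c 1%nat 1%nat * y + 2 * c 2%nat 0%nat * x) with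
      (2 * c 2%nat 0%nat * x + (c 1%nat 0%nat * z + c 1%nat 1%nat * y)) by ring. apply derivable_quadratic.
  - eapply uniqueness_limite. apply Gy.
    replace (fun t => q (x, t, z)) with (fun t => c 0%nat 2%nat * t^2 + (c 0%nat 1%nat * z + c 1%nat 1%nat * x) * t
       + (c 0%nat 0%nat * z^2 + c 1%nat 0%nat * x * z + c 2%nat 0%nat * x^2)).
    2:{ apply functional_extensionality; intro t. rewrite Hq, hom2_exp. ring. }
    unfold grad2; cbv [px py pz fst snd].
    replace (c 0%nat 1%nat * z + 2 * c 0%nat 2%nat * y + c 1%nat 1%nat * x) with
      (2 * c 0%nat 2%nat * y + (c 0%nat 1%nat * z + c 1%nat 1%nat * x)) by ring. apply derivable_quadratic.
  - eapply uniqueness_limite. apply Gz.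
    replace (fun t => q (x, y, t)) with (fun t => c 0%nat 0%nat * t^2 + (c 0%nat 1%nat * y + c 1%nat 0%nat * x) * t
       + (c 0%nat 2%nat * y^2 + c 1%nat 1%nat * x * y + c 2%nat 0%nat * x^2)).
    2:{ apply functional_extensionality; intro t. rewrite Hq, hom2_exp. ring. }
    unfold grad2; cbv [px py pz fst snd].
    replace (2 * c 0%nat 0%nat * z + c 0%nat 1%nat * y + c 1%nat 0%nat * x) with
      (2 * c 0%nat 0%nat * z + (c 0%nat 1%nat * y + c 1%nat 0%nat * x)) by ring. apply derivable_quadratic.
Qed.

Lemma chart_quad : forall q c a1 a2 a3 d, (forall w, q w = hom_poly 2 c w) ->
  local_coeffs 2 (mkM a1 a2 a3) q d ->
  d 0%nat 0%nat = q a3 /\ d 2%nat 0%nat = q a1 /\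
  d 1%nat 0%nat = dot (grad2 c a3) a1 /\ d 0%nat 1%nat = dot (grad2 c a3) a2 /\
  dot (grad2 c a3) a3 = 2 * q a3.
Proof.
  intros q c a1 a2 a3 d Hq Hd.
  assert (E : forall v, q (mat_apply (mkM a1 a2 a3) v) = hom_poly 2 c (px v * px a1 + py v * px a2 + pz v * px a3,
       px v * py a1 + py v * py a2 + pz v * py a3, px v * pz a1 + py v * pz a2 + pz v * pz a3)).
  { intro v. rewrite Hq. f_equal. apply pt_eq; [rewrite mkM_px|rewrite mkM_py|rewrite mkM_pz]; reflexivity. }
  destruct a1 as [[a b] e]; destruct a2 as [[f g] h]; destruct a3 as [[i j] k].
  assert (D00 : d 0%nat 0%nat = hom_poly 2 d (0,0,1)) by (rewrite hom2_exp; ring).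
  assert (D20 : d 2%nat 0%nat = hom_poly 2 d (1,0,0)) by (rewrite hom2_exp; ring).
  assert (D10 : d 1%nat 0%nat = (hom_poly 2 d (1,0,1) - hom_poly 2 d (-1,0,1)) / 2) by (rewrite !hom2_exp; field).
  assert (D01 : d 0%nat 1%nat = (hom_poly 2 d (0,1,1) - hom_poly 2 d (0,-1,1)) / 2) by (rewrite !hom2_exp; field).
  rewrite D00, D20, D10, D01, <- !Hd, !E, !Hq.
  cbv [px py pz fst snd grad2 dot]. rewrite !hom2_exp.
  repeat split; field.
Qed.

Definition sqc (d : nat -> nat -> R) (i j : nat) : R :=
  sum_f_R0 (fun a => sum_f_R0 (fun b =>
    if ((a + b <=? 2) && ((i - a) + (j - b) <=? 2))%bool then d a b * d (i - a)%nat (j - b)%nat else 0) j) i.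

Lemma sqc_spec : forall d v, hom_poly 4 (sqc d) v = hom_poly 2 d v * hom_poly 2 d v.
Proof. intros d [[x y] z]. rewrite hom2_exp. unfold hom_poly, sqc, px, py, pz. simpl. ring. Qed.

Lemma sqc20 : forall d, sqc d 2%nat 0%nat = d 1%nat 0%nat * d 1%nat 0%nat + 2 * d 0%nat 0%nat * d 2%nat 0%nat.
Proof. intros. unfold sqc. simpl. ring. Qed.

(** * Upper bounds: elements of I_s and I_(p,l) are small near s and p. *)

Ltac monomial_hints a b c :=
  assert (Hc : 0 <= c) by lra;
  assert (HA: 0 <= a*a) by nra; assert (HB : 0 <= b*b) by nra;
  assert (Hab : 0 <= a*b) by nra;
  assert (Hac2 : a*a <= c*c) by nra; assert (Hbc2 : b*b <= c*c) by nra;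
  assert (Hab2 : a * b <= c * c) by nra;
  assert (Hbc : b * c <= c * c) by nra; assert (Hacc : a * c <= c * c) by nra;
  assert (K1 : (b*b)*(b*c) <= (b*b)*(c*c)) by (apply Rmult_le_compat_l; lra);
  assert (K2 : (b*b)*(a*c) <= (b*b)*(c*c)) by (apply Rmult_le_compat_l; lra);
  assert (K3 : (a*a)*(b*c) <= (a*a)*(c*c)) by (apply Rmult_le_compat_l; lra);
  assert (K4 : (a*a)*(a*c) <= (a*a)*(c*c)) by (apply Rmult_le_compat_l; lra);
  assert (K5 : (a*a)*(a*b) <= (a*a)*(b*c)) by (apply Rmult_le_compat_l; nra);
  assert (K6 : (a*b)*(b*b) <= (c*b)*(b*b)) by (apply Rmult_le_compat_r; nra);
  assert (K7 : (a*a)*(b*b) <= (c*c)*(b*b)) by (apply Rmult_le_compat_r; nra);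
  assert (K8 : (b*b)*(b*b) <= (c*c)*(b*b)) by (apply Rmult_le_compat_r; nra);
  assert (K9 : (a*a)*(a*a) <= (c*c)*(a*a)) by (apply Rmult_le_compat_r; nra);
  assert (K10 : 0 <= (a*a - b*c)*(a*a - b*c)) by apply Rle_0_sqr.

Lemma mono_pt (i j : nat) a b c : 0 <= a -> 0 <= b -> a <= c -> b <= c -> (2 <= i + j)%nat -> (i + j <= 4)%nat ->
  a ^ i * b ^ j * c ^ (4 - i - j) <= c^2 * (a^2 + b^2).
Proof.
  intros Ha Hb Hac Hbc0 H1 H2. monomial_hints a b c.
  destruct i as [|[|[|[|[|i]]]]]; destruct j as [|[|[|[|[|j]]]]]; simpl in *; try lia; nra.
Qed.

Lemma mono_pl (i j : nat) a b c : 0 <= a -> 0 <= b -> a <= c -> b <= c -> (i + j <= 4)%nat ->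
  ~ (i + j < 2)%nat -> ~ (i = 2 /\ j = 0)%nat -> ~ (i = 1 /\ j = 1)%nat -> ~ (i = 3 /\ j = 0)%nat ->
  a ^ i * b ^ j * c ^ (4 - i - j) <= a^4 + c^2 * b^2.
Proof.
  intros Ha Hb Hac Hbc0 H2 N1 N2 N3 N4. monomial_hints a b c.
  destruct i as [|[|[|[|[|i]]]]]; destruct j as [|[|[|[|[|j]]]]]; simpl in *; try lia; nra.
Qed.

Definition abssum (k : nat) (c : nat -> nat -> R) : R :=
  sum_f_R0 (fun i => sum_f_R0 (fun j => Rabs (c i j)) (k - i)) k.

Lemma hom_bound : forall k c v Phi,
  (forall i j, (i <= k)%nat -> (j <= k - i)%nat ->
     Rabs (c i j * px v ^ i * py v ^ j * pz v ^ (k - i - j)) <= Rabs (c i j) * Phi) ->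
  Rabs (hom_poly k c v) <= abssum k c * Phi.
Proof.
  intros k c v Phi H. unfold hom_poly, abssum.
  eapply Rle_trans. apply sum_f_R0_triangle.
  rewrite (Rmult_comm _ Phi), scal_sum. apply sum_Rle. intros i Hi.
  eapply Rle_trans. apply sum_f_R0_triangle.
  rewrite (Rmult_comm _ Phi), scal_sum. apply sum_Rle. intros j Hj.
  apply H; auto.
Qed.

Lemma abssum_nonneg : forall k c, 0 <= abssum k c.
Proof.
  intros. unfold abssum. apply cond_pos_sum. intro i. apply cond_pos_sum. intro j. apply Rabs_pos.
Qed.

Lemma term_abs : forall (c x y z : R) i j l, Rabs (c * x ^ i * y ^ j * z ^ l) = Rabs c * (Rabs x ^ i * Rabs y ^ j * Rabs z ^ l).
Proof. intros. rewrite !Rabs_mult, <- !RPow_abs. ring. Qed.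

Lemma upper_pt : forall c x y z,
  c 0%nat 0%nat = 0 -> c 1%nat 0%nat = 0 -> c 0%nat 1%nat = 0 ->
  Rabs x <= Rabs z -> Rabs y <= Rabs z ->
  Rabs (hom_poly 4 c (x, y, z)) <= abssum 4 c * ((z * x) ^ 2 + (z * y) ^ 2).
Proof.
  intros c x y z H00 H10 H01 Hx Hy. apply hom_bound. intros i j Hi Hj.
  cbv [px py pz fst snd]. rewrite term_abs.
  destruct (Nat.lt_ge_cases (i + j) 2) as [Hl|Hl].
  - assert (E : c i j = 0) by (destruct i as [|[|i]]; destruct j as [|[|j]]; try lia; assumption).
    rewrite E, Rabs_R0. lra.
  - apply Rmult_le_compat_l. apply Rabs_pos.
    replace ((z * x) ^ 2 + (z * y) ^ 2) with (Rabs z ^ 2 * (Rabs x ^ 2 + Rabs y ^ 2)) by (rewrite !pow2_abs; ring).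
    apply mono_pt; [apply Rabs_pos|apply Rabs_pos|exact Hx|exact Hy|lia|lia].
Qed.

Lemma upper_pl : forall c x y z,
  c 0%nat 0%nat = 0 -> c 1%nat 0%nat = 0 -> c 0%nat 1%nat = 0 ->
  c 2%nat 0%nat = 0 -> c 1%nat 1%nat = 0 -> c 3%nat 0%nat = 0 ->
  Rabs x <= Rabs z -> Rabs y <= Rabs z ->
  Rabs (hom_poly 4 c (x, y, z)) <= abssum 4 c * ((x ^ 2) ^ 2 + (z * y) ^ 2).
Proof.
  intros c x y z H00 H10 H01 H20 H11 H30 Hx Hy. apply hom_bound. intros i j Hi Hj.
  cbv [px py pz fst snd]. rewrite term_abs.
  destruct (classic ((i + j < 2)%nat \/ (i = 2 /\ j = 0)%nat \/ (i = 1 /\ j = 1)%nat \/ (i = 3 /\ j = 0)%nat)) as [Hl|Hl].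
  - assert (E : c i j = 0).
    { destruct Hl as [Hl|[[-> ->]|[[-> ->]|[-> ->]]]]; auto.
      destruct i as [|[|i]]; destruct j as [|[|j]]; try lia; assumption. }
    rewrite E, Rabs_R0. lra.
  - apply Rmult_le_compat_l. apply Rabs_pos.
    assert (E1 : Rabs x ^ 4 = (x ^ 2) ^ 2) by (rewrite <- (pow2_abs x); ring).
    assert (E2 : Rabs z ^ 2 * Rabs y ^ 2 = (z * y) ^ 2) by (rewrite !pow2_abs; ring).
    rewrite <- E1, <- E2.
    apply mono_pl; [apply Rabs_pos|apply Rabs_pos|exact Hx|exact Hy|lia|tauto|tauto|tauto|tauto].
Qed.

Lemma upper_chart_pt : forall ss pls f s L, I_S ss pls f -> In s ss ->
  L <> pt0 -> s <> pt0 -> dot L s = 0 ->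
  exists K, 0 <= K /\ forall w, in_cone 1 w ->
    Rabs (f (mat_apply (mkM (cross L s) L s) w)) <= K * ((pz w * px w) ^ 2 + (pz w * py w) ^ 2).
Proof.
  intros ss pls f s L [Hf [Hpt _]] Hs HL Hs0 HLs.
  destruct (chart_props L s HL Hs0 HLs) as [_ [_ [_ [Hcen _]]]].
  destruct (inH_comp 4 f (chartM L s) Hf) as [c Hc].
  destruct (Hpt s Hs) as [_ Hord]. destruct (Hord _ _ Hcen Hc) as [H00 [H10 H01]].
  exists (abssum 4 c). split. apply abssum_nonneg.
  intros [[x y] z] [Hx Hy]. rewrite !Rmult_1_l in Hx, Hy. cbv [px py pz fst snd] in *.
  change (mkM (cross L s) L s) with (chartM L s). rewrite Hc. apply upper_pt; auto.
Qed.

Lemma upper_chart_pl : forall ss pls f pl, I_S ss pls f -> In pl pls ->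
  snd pl <> pt0 -> fst pl <> pt0 -> dot (snd pl) (fst pl) = 0 ->
  exists K, 0 <= K /\ forall w, in_cone 1 w ->
    Rabs (f (mat_apply (mkM (cross (snd pl) (fst pl)) (snd pl) (fst pl)) w)) <= K * ((px w ^ 2) ^ 2 + (pz w * py w) ^ 2).
Proof.
  intros ss pls f pl [Hf [_ Hpl]] Hpl' HL Hp0 HLp.
  destruct (chart_props _ _ HL Hp0 HLp) as [_ [_ [_ [Hcen Had]]]].
  destruct (inH_comp 4 f (chartM (snd pl) (fst pl)) Hf) as [c Hc].
  destruct (Hpl pl Hpl') as [_ Hord]. destruct (Hord _ _ Hcen Had Hc) as [H00 [H10 [H01 [H20 [H11 H30]]]]].
  exists (abssum 4 c). split. apply abssum_nonneg.
  intros [[x y] z] [Hx Hy]. rewrite !Rmult_1_l in Hx, Hy. cbv [px py pz fst snd] in Hx, Hy |- *.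
  change (mkM (cross (snd pl) (fst pl)) (snd pl) (fst pl)) with (chartM (snd pl) (fst pl)). rewrite Hc. apply upper_pl; auto.
Qed.

(** * Lower bounds: a perturbed invertible 2x2 system. *)

Lemma sq_abs_le : forall E a, 0 <= a -> Rabs E <= a -> E ^ 2 <= a ^ 2.
Proof. intros. rewrite <- (pow2_abs E). pose proof (Rabs_pos E). simpl. nra. Qed.

Lemma sq_sub_le : forall a b, (a - b)^2 <= 2 * a^2 + 2 * b^2.
Proof. intros. pose proof (pow2_ge_0 (a + b)). replace ((a - b)^2) with (2 * a^2 + 2 * b^2 - (a+b)^2) by ring. lra. Qed.

Lemma sq_add_le : forall a b, (a + b)^2 <= 2 * a^2 + 2 * b^2.
Proof. intros. pose proof (pow2_ge_0 (a - b)). replace ((a + b)^2) with (2 * a^2 + 2 * b^2 - (a-b)^2) by ring. lra. Qed.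

Lemma inverse_2x2_bound : forall p q r s X Y,
  (p * s - q * r) ^ 2 * (X ^ 2 + Y ^ 2) <=
  2 * (p^2 + q^2 + r^2 + s^2) * ((p * X + q * Y) ^ 2 + (r * X + s * Y) ^ 2).
Proof.
  intros p q r s X Y.
  set (l1 := p * X + q * Y). set (l2 := r * X + s * Y).
  replace ((p * s - q * r) ^ 2 * (X ^ 2 + Y ^ 2))
    with ((s * l1 - q * l2) ^ 2 + (p * l2 - r * l1) ^ 2) by (unfold l1, l2; ring).
  pose proof (sq_sub_le (s * l1) (q * l2)). pose proof (sq_sub_le (p * l2) (r * l1)).
  assert (0 <= (p * l1) ^ 2 + (q * l1) ^ 2 + (r * l2) ^ 2 + (s * l2) ^ 2).
  { pose proof (pow2_ge_0 (p * l1)); pose proof (pow2_ge_0 (q * l1));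
    pose proof (pow2_ge_0 (r * l2)); pose proof (pow2_ge_0 (s * l2)); lra. }
  replace (2 * (p^2 + q^2 + r^2 + s^2) * (l1 ^ 2 + l2 ^ 2)) with
    (2 * ((s * l1) ^ 2 + (q * l2) ^ 2 + (r * l1) ^ 2 + (p * l2) ^ 2)
     + 2 * ((p * l1) ^ 2 + (q * l1) ^ 2 + (r * l2) ^ 2 + (s * l2) ^ 2)) by ring.
  lra.
Qed.

Lemma perturbed_square : forall l E X Y eps, 0 <= eps ->
  Rabs E <= eps * (Rabs X + Rabs Y) ->
  l ^ 2 <= 2 * (l + E) ^ 2 + 4 * eps ^ 2 * (X ^ 2 + Y ^ 2).
Proof.
  intros l E X Y eps Heps HE.
  assert (HXY : (Rabs X + Rabs Y) ^ 2 <= 2 * (X ^ 2 + Y ^ 2)).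
  { pose proof (sq_add_le (Rabs X) (Rabs Y)). rewrite !pow2_abs in H. lra. }
  assert (HE2 : E ^ 2 <= 2 * eps ^ 2 * (X ^ 2 + Y ^ 2)).
  { assert (0 <= eps * (Rabs X + Rabs Y)) by (pose proof (Rabs_pos E); lra).
    eapply Rle_trans. apply sq_abs_le; eauto.
    replace ((eps * (Rabs X + Rabs Y)) ^ 2) with (eps ^ 2 * (Rabs X + Rabs Y) ^ 2) by ring.
    assert (0 <= eps ^ 2) by apply pow2_ge_0.
    assert (eps ^ 2 * (Rabs X + Rabs Y) ^ 2 <= eps ^ 2 * (2 * (X ^ 2 + Y ^ 2)))
      by (apply Rmult_le_compat_l; lra).
    lra. }
  pose proof (pow2_ge_0 (l + 2 * E)).
  replace (l ^ 2) with (2 * (l + E) ^ 2 + 2 * E ^ 2 - (l + 2 * E) ^ 2) by ring.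
  lra.
Qed.

Lemma perturbed_2x2_bound : forall p q r s X Y E1 E2 eps,
  0 <= eps ->
  Rabs E1 <= eps * (Rabs X + Rabs Y) -> Rabs E2 <= eps * (Rabs X + Rabs Y) ->
  32 * (p^2 + q^2 + r^2 + s^2) * eps ^ 2 <= (p * s - q * r) ^ 2 ->
  (p * s - q * r) ^ 2 * (X ^ 2 + Y ^ 2) <=
  8 * (p^2 + q^2 + r^2 + s^2) * ((p * X + q * Y + E1) ^ 2 + (r * X + s * Y + E2) ^ 2).
Proof.
  intros p q r s X Y E1 E2 eps Heps H1 H2 Hsmall.
  set (N := p^2 + q^2 + r^2 + s^2) in *.
  assert (HN : 0 <= N) by (unfold N; simpl; nra).
  assert (HXY : 0 <= X ^ 2 + Y ^ 2) by (pose proof (pow2_ge_0 X); pose proof (pow2_ge_0 Y); lra).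
  pose proof (inverse_2x2_bound p q r s X Y) as Hinv. fold N in Hinv.
  pose proof (perturbed_square (p * X + q * Y) E1 X Y eps Heps H1).
  pose proof (perturbed_square (r * X + s * Y) E2 X Y eps Heps H2).
  assert (2 * N * ((p * X + q * Y) ^ 2 + (r * X + s * Y) ^ 2) <=
          2 * N * (2 * ((p * X + q * Y + E1) ^ 2 + (r * X + s * Y + E2) ^ 2)
                   + 8 * eps ^ 2 * (X ^ 2 + Y ^ 2))) by (apply Rmult_le_compat_l; lra).
  assert (16 * N * eps ^ 2 * (X ^ 2 + Y ^ 2) <= (p * s - q * r) ^ 2 * (X ^ 2 + Y ^ 2) / 2).
  { assert (32 * N * eps ^ 2 * (X ^ 2 + Y ^ 2) <= (p * s - q * r) ^ 2 * (X ^ 2 + Y ^ 2))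
      by (apply Rmult_le_compat_r; lra).
    lra. }
  lra.
Qed.

Lemma eta_choice : forall P N B, P <> 0 -> 0 <= N -> 0 <= B ->
  exists eta, 0 < eta <= 1 /\ 32 * N * (B * eta) ^ 2 <= P ^ 2.
Proof.
  intros P N B HP HN HB.
  assert (HaP : 0 < Rabs P) by (apply Rabs_pos_lt; auto).
  set (e := Rabs P / (6 * (N + 1) * (B + 1))).
  assert (He : 0 < e) by (unfold e; apply Rdiv_lt_0_compat; nra).
  exists (Rmin 1 e). split. split. apply Rmin_pos; lra. apply Rmin_l.
  set (u := B * Rmin 1 e).
  assert (Hu0 : 0 <= u) by (unfold u; apply Rmult_le_pos; auto; left; apply Rmin_pos; lra).
  assert (Hue : u <= B * e) by (unfold u; apply Rmult_le_compat_l; auto; apply Rmin_r).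
  assert (HBe : B * e * (6 * (N + 1)) <= Rabs P).
  { unfold e. replace (B * (Rabs P / (6 * (N + 1) * (B + 1))) * (6 * (N + 1))) with (Rabs P * (B / (B + 1))) by (field; lra).
    assert (B / (B + 1) <= 1) by (apply (Rmult_le_reg_r (B + 1)); [lra|]; unfold Rdiv; rewrite Rmult_assoc, Rinv_l by lra; lra). nra. }
  assert (Hu6 : u * (6 * (N + 1)) <= Rabs P) by nra.
  assert (Hsq : (u * (6 * (N + 1))) ^ 2 <= P ^ 2).
  { rewrite <- (pow2_abs P). apply pow_incr. split; nra. }
  assert (32 * N * u ^ 2 <= (u * (6 * (N + 1))) ^ 2).
  { replace ((u * (6 * (N + 1))) ^ 2) with (36 * (N + 1) ^ 2 * u ^ 2) by ring.
    apply Rmult_le_compat_r. apply pow2_ge_0. nra. }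
  lra.
Qed.

Lemma pair_lower_pointwise : forall p q r t X Y Q1 Q2 S K1 K2 eps,
  0 <= eps -> 0 <= K1 -> 0 <= K2 -> 0 <= S ->
  Q1 * Q1 <= K1 * S -> Q2 * Q2 <= K2 * S ->
  Rabs (Q1 - (p * X + q * Y)) <= eps * (Rabs X + Rabs Y) ->
  Rabs (Q2 - (r * X + t * Y)) <= eps * (Rabs X + Rabs Y) ->
  32 * (p^2 + q^2 + r^2 + t^2) * eps ^ 2 <= (p * t - q * r) ^ 2 ->
  (p * t - q * r) ^ 2 * (X ^ 2 + Y ^ 2) <= 8 * (p^2 + q^2 + r^2 + t^2) * (K1 + K2 + 1) * S.
Proof.
  intros p q r t X Y Q1 Q2 S K1 K2 eps Heps HK1 HK2 HS Hdom1 Hdom2 HE1 HE2 Hsmall.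
  pose proof (perturbed_2x2_bound p q r t X Y _ _ eps Heps HE1 HE2 Hsmall) as Hlow.
  replace (p * X + q * Y + (Q1 - (p * X + q * Y))) with Q1 in Hlow by ring.
  replace (r * X + t * Y + (Q2 - (r * X + t * Y))) with Q2 in Hlow by ring.
  set (N := p^2 + q^2 + r^2 + t^2) in *.
  assert (HN : 0 <= N) by (unfold N; simpl; nra).
  assert (8 * N * (Q1 ^ 2 + Q2 ^ 2) <= 8 * N * ((K1 + K2 + 1) * S)).
  { apply Rmult_le_compat_l; [lra|]. simpl. nra. }
  lra.
Qed.

Lemma lower_from_pair : forall (S Q1 Q2 X Y : Pt -> R) p q r t B1 B2 K1 K2,
  p * t - q * r <> 0 -> 0 <= B1 -> 0 <= B2 -> 0 <= K1 -> 0 <= K2 ->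
  (forall w, 0 <= S w) ->
  (forall w, Q1 w * Q1 w <= K1 * S w) -> (forall w, Q2 w * Q2 w <= K2 * S w) ->
  (forall eta w, 0 <= eta -> in_cone eta w ->
     Rabs (Q1 w - (p * X w + q * Y w)) <= B1 * eta * (Rabs (X w) + Rabs (Y w)) /\
     Rabs (Q2 w - (r * X w + t * Y w)) <= B2 * eta * (Rabs (X w) + Rabs (Y w))) ->
  exists kappa eta, 0 < kappa /\ 0 < eta <= 1 /\
    forall w, in_cone eta w -> kappa * (X w ^ 2 + Y w ^ 2) <= S w.
Proof.
  intros S Q1 Q2 X Y p q r t B1 B2 K1 K2 HP HB1 HB2 HK1 HK2 HS Hdom1 Hdom2 Hexp.
  set (P := p * t - q * r) in *.
  set (N := p^2 + q^2 + r^2 + t^2).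
  assert (HN : 0 < N).
  { unfold N. destruct (Req_dec p 0); destruct (Req_dec q 0); [|simpl; nra|simpl; nra|simpl; nra].
    exfalso. apply HP. unfold P. subst. ring. }
  destruct (eta_choice P N (B1 + B2) HP ltac:(lra) ltac:(lra)) as [eta [Heta Hsmall]].
  assert (HP2 : 0 < P ^ 2) by (replace (P ^ 2) with (P * P) by ring; apply Rsqr_pos_lt; auto).
  set (Kt := 8 * N * (K1 + K2 + 1)).
  assert (HKt : 0 < Kt) by (unfold Kt; nra).
  exists (P ^ 2 / Kt), eta. split; [apply Rdiv_lt_0_compat; auto|split; auto].
  intros w Hw.
  destruct (Hexp eta w ltac:(lra) Hw) as [HR1 HR2].
  assert (Habs : 0 <= Rabs (X w) + Rabs (Y w)) by (pose proof (Rabs_pos (X w)); pose proof (Rabs_pos (Y w)); lra).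
  assert (0 <= B1 * eta * (Rabs (X w) + Rabs (Y w))) by (apply Rmult_le_pos; [apply Rmult_le_pos|]; lra).
  assert (0 <= B2 * eta * (Rabs (X w) + Rabs (Y w))) by (apply Rmult_le_pos; [apply Rmult_le_pos|]; lra).
  pose proof (pair_lower_pointwise p q r t (X w) (Y w) (Q1 w) (Q2 w) (S w) K1 K2 ((B1 + B2) * eta)
                ltac:(nra) HK1 HK2 (HS w) (Hdom1 w) (Hdom2 w) ltac:(lra) ltac:(lra) Hsmall) as Hpt.
  apply (Rmult_le_reg_l Kt); auto.
  replace (Kt * (P ^ 2 / Kt * (X w ^ 2 + Y w ^ 2))) with (P ^ 2 * (X w ^ 2 + Y w ^ 2)) by (field; lra).
  unfold Kt, P, N. lra.
Qed.

Lemma rem_bound_pt : forall a b c x y z eta, 0 <= eta ->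
  Rabs x <= eta * Rabs z -> Rabs y <= eta * Rabs z ->
  Rabs (a * y ^ 2 + b * x * y + c * x ^ 2) <= (Rabs a + Rabs b + Rabs c) * eta * (Rabs (z * x) + Rabs (z * y)).
Proof.
  intros a b c x y z eta He Hx Hy.
  rewrite !Rabs_mult.
  pose proof (Rabs_pos x). pose proof (Rabs_pos y). pose proof (Rabs_pos z).
  pose proof (Rabs_pos a). pose proof (Rabs_pos b). pose proof (Rabs_pos c).
  assert (T1 : Rabs (a * y ^ 2) <= Rabs a * (eta * (Rabs z * Rabs y))).
  { rewrite Rabs_mult, <- RPow_abs. apply Rmult_le_compat_l; auto. simpl. nra. }
  assert (T2 : Rabs (b * x * y) <= Rabs b * (eta * (Rabs z * Rabs y))).
  { rewrite !Rabs_mult, Rmult_assoc. apply Rmult_le_compat_l; auto. nra. }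
  assert (T3 : Rabs (c * x ^ 2) <= Rabs c * (eta * (Rabs z * Rabs x))).
  { rewrite Rabs_mult, <- RPow_abs. apply Rmult_le_compat_l; auto. simpl. nra. }
  assert (Rabs (a * y ^ 2 + b * x * y + c * x ^ 2) <= Rabs (a * y ^ 2) + Rabs (b * x * y) + Rabs (c * x ^ 2)).
  { eapply Rle_trans. apply Rabs_triang. pose proof (Rabs_triang (a * y ^ 2) (b * x * y)). lra. }
  assert (0 <= eta * (Rabs z * Rabs x)) by nra. assert (0 <= eta * (Rabs z * Rabs y)) by nra.
  assert (Rabs a * (eta * (Rabs z * Rabs y)) + Rabs b * (eta * (Rabs z * Rabs y)) + Rabs c * (eta * (Rabs z * Rabs x))
    <= (Rabs a + Rabs b + Rabs c) * eta * (Rabs z * Rabs x + Rabs z * Rabs y)) by nra.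
  lra.
Qed.

Lemma rem_bound_pl : forall a b x y z eta, 0 <= eta ->
  Rabs x <= eta * Rabs z -> Rabs y <= eta * Rabs z ->
  Rabs (b * x * y + a * y ^ 2) <= (Rabs a + Rabs b) * eta * (Rabs (x ^ 2) + Rabs (z * y)).
Proof.
  intros a b x y z eta He Hx Hy.
  pose proof (Rabs_pos x). pose proof (Rabs_pos y). pose proof (Rabs_pos z).
  pose proof (Rabs_pos a). pose proof (Rabs_pos b). pose proof (Rabs_pos (x ^ 2)).
  assert (T1 : Rabs (a * y ^ 2) <= Rabs a * (eta * (Rabs z * Rabs y))).
  { rewrite Rabs_mult, <- RPow_abs. apply Rmult_le_compat_l; auto. simpl. nra. }
  assert (T2 : Rabs (b * x * y) <= Rabs b * (eta * (Rabs z * Rabs y))).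
  { rewrite !Rabs_mult, Rmult_assoc. apply Rmult_le_compat_l; auto. nra. }
  assert (Rabs (b * x * y + a * y ^ 2) <= Rabs (b * x * y) + Rabs (a * y ^ 2)) by apply Rabs_triang.
  rewrite (Rabs_mult z y).
  assert (0 <= eta * (Rabs z * Rabs y)) by nra.
  assert (Rabs a * (eta * (Rabs z * Rabs y)) + Rabs b * (eta * (Rabs z * Rabs y))
    <= (Rabs a + Rabs b) * eta * (Rabs (x ^ 2) + Rabs z * Rabs y)).
  { assert (0 <= (Rabs a + Rabs b) * eta * Rabs (x ^ 2)) by (apply Rmult_le_pos; [nra|auto]). nra. }
  lra.
Qed.

(** * From local to global comparison of quartics. *)

Lemma near_axis_in_cone : forall a1 a2 a3 eta lam,
  dot a1 (cross a2 a3) <> 0 -> 0 < eta -> lam <> 0 ->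
  exists d, 0 < d /\ forall x, near d x (scal lam a3) -> in_cone eta (winv a1 a2 a3 x).
Proof.
  intros a1 a2 a3 eta lam HD He Hl.
  set (t := scal lam a3).
  assert (Ht : winv a1 a2 a3 t = (0, 0, lam)).
  { replace t with (mat_apply (mkM a1 a2 a3) (0, 0, lam)). apply winv_M; auto.
    unfold t. apply pt_eq; rewrite ?mkM_px, ?mkM_py, ?mkM_pz; unfold scal, px, py, pz; simpl; ring. }
  assert (Hlam : 0 < Rabs lam) by (apply Rabs_pos_lt; auto).
  set (e := eta * Rabs lam / 2).
  assert (He0 : 0 < e) by (unfold e; nra).
  destruct (cont_winv_x a1 a2 a3 t e He0) as [d1 [Hd1 H1]].
  destruct (cont_winv_y a1 a2 a3 t e He0) as [d2 [Hd2 H2]].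
  destruct (cont_winv_z a1 a2 a3 t (Rabs lam / 2) ltac:(lra)) as [d3 [Hd3 H3]].
  exists (Rmin d1 (Rmin d2 d3)). split; [apply Rmin_pos; auto; apply Rmin_pos; auto|].
  intros x Hx.
  specialize (H1 x (near_mono _ _ _ _ (Rmin_l _ _) Hx)).
  specialize (H2 x (near_mono _ _ _ _ (Rle_trans _ _ _ (Rmin_r _ _) (Rmin_l _ _)) Hx)).
  specialize (H3 x (near_mono _ _ _ _ (Rle_trans _ _ _ (Rmin_r _ _) (Rmin_r _ _)) Hx)).
  rewrite Ht in H1, H2, H3.
  change (px (0, 0, lam)) with 0 in H1. change (py (0, 0, lam)) with 0 in H2.
  change (pz (0, 0, lam)) with lam in H3.
  set (w := winv a1 a2 a3 x) in *.
  rewrite Rminus_0_r in H1, H2.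
  assert (Hz : Rabs lam / 2 <= Rabs (pz w)).
  { pose proof (Rabs_triang_inv lam (pz w)). rewrite <- Rabs_Ropp in H3.
    replace (- (pz w - lam)) with (lam - pz w) in H3 by ring. lra. }
  unfold e in H1, H2. split; nra.
Qed.

Lemma local_bound_from_chart : forall (f S : form) a1 a2 a3 (Phi : Pt -> R) kappa eta K lam,
  dot a1 (cross a2 a3) <> 0 -> 0 < kappa -> 0 < eta <= 1 -> 0 <= K ->
  (forall w, in_cone eta w -> kappa * Phi w <= S (mat_apply (mkM a1 a2 a3) w)) ->
  (forall w, in_cone 1 w -> Rabs (f (mat_apply (mkM a1 a2 a3) w)) <= K * Phi w) ->
  lam <> 0 ->
  exists d C, 0 < d /\ forall x, near d x (scal lam a3) -> Rabs (f x) <= C * S x.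
Proof.
  intros f S a1 a2 a3 Phi kappa eta K lam HD Hk He HK Hlow Hup Hl.
  destruct (near_axis_in_cone a1 a2 a3 eta lam HD ltac:(lra) Hl) as [d [Hd Hcone]].
  exists d, (K / kappa). split; auto. intros x Hx.
  set (w := winv a1 a2 a3 x).
  assert (Ex : mat_apply (mkM a1 a2 a3) w = x) by (apply winv_spec; auto).
  assert (Hw : in_cone eta w) by (apply Hcone; auto).
  assert (Hw1 : in_cone 1 w).
  { destruct Hw as [Hwx Hwy]. pose proof (Rabs_pos (pz w)). split; nra. }
  specialize (Hlow w Hw). specialize (Hup w Hw1). rewrite Ex in Hlow, Hup.
  assert (Phi w <= S x / kappa) by (apply (Rmult_le_reg_l kappa); auto; field_simplify; lra).
  assert (K * Phi w <= K * (S x / kappa)) by (apply Rmult_le_compat_l; auto).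
  unfold Rdiv in *. lra.
Qed.

Lemma local_bound_off_zeros : forall f S : form, cont f -> cont S -> forall t, 0 < S t ->
  exists d C, 0 < d /\ forall x, near d x t -> Rabs (f x) <= C * S x.
Proof.
  intros f S Hf HS t Ht.
  destruct (HS t (S t / 2)) as [d1 [Hd1 H1]]. lra.
  destruct (Hf t 1) as [d2 [Hd2 H2]]. lra.
  exists (Rmin d1 d2), (2 * (Rabs (f t) + 1) / S t). split. apply Rmin_pos; auto.
  intros x Hx. specialize (H1 x (near_mono _ _ _ _ (Rmin_l _ _) Hx)).
  specialize (H2 x (near_mono _ _ _ _ (Rmin_r _ _) Hx)).
  apply Rabs_def2 in H1. destruct H1 as [H1a H1b].
  assert (Hfx : Rabs (f x) <= Rabs (f t) + 1).
  { replace (f x) with (f t + (f x - f t)) by ring. eapply Rle_trans. apply Rabs_triang. lra. }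
  pose proof (Rabs_pos (f t)).
  apply Rle_trans with (Rabs (f t) + 1); auto.
  apply (Rmult_le_reg_l (S t / 2)). lra.
  replace (S t / 2 * (2 * (Rabs (f t) + 1) / S t * S x)) with ((Rabs (f t) + 1) * S x) by (field; lra).
  assert ((Rabs (f t) + 1) * (S t / 2) <= (Rabs (f t) + 1) * S x) by (apply Rmult_le_compat_l; lra).
  lra.
Qed.

Lemma Rabs_le_bounds : forall x a, Rabs x <= a -> - a <= x /\ x <= a.
Proof. intros x a H. unfold Rabs in H. destruct (Rcase_abs x); split; lra. Qed.

Definition toPt (T : Compactness.Tn 3 R) : Pt :=
  match T with (x, (y, (z, _))) => (x, y, z) end.

Lemma Rmax_scal : forall a b k, 0 < k -> Rmax (a * k) (b * k) = Rmax a b * k.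
Proof. intros. unfold Rmax. destruct (Rle_dec (a*k) (b*k)); destruct (Rle_dec a b); nra. Qed.

Lemma fold_abs_bound : forall (A : Type) (h : A -> R) (l : list A),
  0 <= fold_right (fun T acc => Rabs (h T) + acc) 0 l /\
  forall T, In T l -> Rabs (h T) <= fold_right (fun T acc => Rabs (h T) + acc) 0 l.
Proof.
  intros A h l. induction l as [|T l IH]; simpl.
  - split. lra. intros T' [].
  - destruct IH as [IH1 IH2]. pose proof (Rabs_pos (h T)). split. lra.
    intros T' [E|HT]. subst T'. lra. specialize (IH2 T' HT). lra.
Qed.

Lemma choose_local_bounds : forall f S : form,
  (forall t, t <> pt0 -> exists d C, 0 < d /\ forall x, near d x t -> Rabs (f x) <= C * S x) ->
  exists G : Pt -> R * R, forall t, 0 < fst (G t) /\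
    (t <> pt0 -> forall x, near (fst (G t)) x t -> Rabs (f x) <= snd (G t) * S x).
Proof.
  intros f S Hloc.
  assert (Hex : forall t : Pt, exists p : R * R, 0 < fst p /\
     (t <> pt0 -> forall x, near (fst p) x t -> Rabs (f x) <= snd p * S x)).
  { intro t. destruct (classic (t = pt0)) as [E|E].
    - exists (1, 0). simpl. split. lra. intro; contradiction.
    - destruct (Hloc t E) as [d [C [Hd H]]]. exists (d, C). simpl. auto. }
  exists (fun t => proj1_sig (constructive_indefinite_description _ (Hex t))).
  intro t. destruct (constructive_indefinite_description _ (Hex t)) as [p Hp]. simpl. auto.
Qed.

(* Compactness of the unit sphere of the max-norm: finitely many of the local
   bounds cover it, so one constant works on the whole sphere. *)
Lemma bound_on_unit_sphere : forall f S : form, (forall v, 0 <= S v) ->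
  (forall t, t <> pt0 -> exists d C, 0 < d /\ forall x, near d x t -> Rabs (f x) <= C * S x) ->
  exists C, 0 <= C /\ forall x y z, Rmax (Rabs x) (Rmax (Rabs y) (Rabs z)) = 1 ->
    Rabs (f (x, y, z)) <= C * S (x, y, z).
Proof.
  intros f S HS0 Hloc.
  destruct (choose_local_bounds f S Hloc) as [G HG].
  assert (Hdpos : forall T, 0 < Rmin (1/4) (fst (G (toPt T)))).
  { intro T. apply Rmin_pos. lra. apply HG. }
  set (delta := fun T => RIneq.mkposreal _ (Hdpos T)).
  set (lo := ((-1), ((-1), ((-1), tt))) : Compactness.Tn 3 R).
  set (hi := (1, (1, (1, tt))) : Compactness.Tn 3 R).
  apply NNPP. intro Hn. apply (Compactness.compactness_list 3 lo hi delta). intros [l Hl]. apply Hn.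
  set (C := fold_right (fun T acc => Rabs (snd (G (toPt T))) + acc) 0 l).
  destruct (fold_abs_bound _ (fun T => snd (G (toPt T))) l) as [HC0 HC1]. fold C in HC0, HC1.
  exists C. split; auto. intros x y z Hm.
  assert (Hx1 : Rabs x <= 1) by (rewrite <- Hm; apply Rmax_l).
  assert (Hy1 : Rabs y <= 1) by (rewrite <- Hm; eapply Rle_trans; [apply Rmax_l|apply Rmax_r]).
  assert (Hz1 : Rabs z <= 1) by (rewrite <- Hm; eapply Rle_trans; [apply Rmax_r|apply Rmax_r]).
  assert (Hb : Compactness.bounded_n 3 lo hi (x, (y, (z, tt)))).
  { simpl. apply Rabs_le_bounds in Hx1, Hy1, Hz1. lra. }
  destruct (Hl _ Hb) as [T [HTl [_ Hcl]]].
  destruct T as [tx [ty [tz []]]]. simpl in Hcl. destruct Hcl as [Cx [Cy [Cz _]]].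
  assert (Hdl : Rmin (1/4) (fst (G (tx, ty, tz))) <= 1/4) by apply Rmin_l.
  assert (Hdr : Rmin (1/4) (fst (G (tx, ty, tz))) <= fst (G (tx, ty, tz))) by apply Rmin_r.
  (* the centre of the covering ball is not the origin, the sphere being far from it *)
  assert (Hne : (tx, ty, tz) <> pt0).
  { intro E. injection E as E1 E2 E3. subst.
    rewrite Rminus_0_r in Cx, Cy, Cz.
    unfold Rmax in Hm. destruct (Rle_dec (Rabs y) (Rabs z)); destruct (Rle_dec (Rabs x) _); lra. }
  destruct (HG (tx, ty, tz)) as [_ HG2].
  assert (Hnear : near (fst (G (tx, ty, tz))) (x, y, z) (tx, ty, tz)).
  { unfold near, px, py, pz; simpl. simpl in Cx, Cy, Cz. repeat split; lra. }
  specialize (HG2 Hne _ Hnear). specialize (HC1 _ HTl). simpl in HC1.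
  pose proof (HS0 (x, y, z)). pose proof (Rle_abs (snd (G (tx, ty, tz)))).
  assert (snd (G (tx, ty, tz)) * S (x, y, z) <= C * S (x, y, z)) by (apply Rmult_le_compat_r; lra).
  lra.
Qed.

(* Both sides being homogeneous of degree 4, a bound on the unit sphere of the
   max-norm extends to all of R^3. *)
Lemma bound_by_homogeneity : forall (f S : form) C, in_H 4 f -> in_H 4 S -> (forall v, 0 <= S v) ->
  (forall x y z, Rmax (Rabs x) (Rmax (Rabs y) (Rabs z)) = 1 -> Rabs (f (x, y, z)) <= C * S (x, y, z)) ->
  forall v, Rabs (f v) <= C * S v.
Proof.
  intros f S C Hf HS HS0 Unit [[x y] z].
  set (m := Rmax (Rabs x) (Rmax (Rabs y) (Rabs z))).
  assert (Hxm : Rabs x <= m) by apply Rmax_l.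
  assert (Hym : Rabs y <= m) by (eapply Rle_trans; [apply Rmax_l|apply Rmax_r]).
  assert (Hzm : Rabs z <= m) by (eapply Rle_trans; [apply Rmax_r|apply Rmax_r]).
  assert (Hm0 : 0 <= m) by (pose proof (Rabs_pos x); lra).
  destruct (Req_dec m 0) as [Hm|Hm].
  - (* the origin: both forms vanish there *)
    assert (x = 0 /\ y = 0 /\ z = 0) as [-> [-> ->]].
    { apply Rabs_le_bounds in Hxm, Hym, Hzm. repeat split; lra. }
    replace ((0, 0, 0) : Pt) with (scal 0 (0, 0, 0)) by (unfold scal, px, py, pz; simpl; f_equal; [f_equal|]; ring).
    rewrite (inH4_scal f), (inH4_scal S) by auto. simpl. rewrite !Rmult_0_l, Rabs_R0.
    pose proof (HS0 (0,0,0)). nra.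
  -
    assert (Hmp : 0 < m) by lra.
    assert (HU := Unit (/ m * x) (/ m * y) (/ m * z)).
    assert (Hinv : 0 < / m) by (apply Rinv_0_lt_compat; auto).
    rewrite !Rabs_mult, (Rabs_right (/ m)) in HU by lra.
    rewrite !(Rmult_comm (/ m)), !Rmax_scal in HU by auto. fold m in HU.
    rewrite Rinv_r in HU by auto. specialize (HU eq_refl).
    replace ((x * / m, y * / m, z * / m) : Pt) with (scal (/ m) (x, y, z)) in HU
      by (unfold scal, px, py, pz; simpl; f_equal; [f_equal|]; ring).
    rewrite (inH4_scal f), (inH4_scal S) in HU by auto.
    rewrite Rabs_mult, (Rabs_right ((/ m) ^ 4)) in HU by (apply Rle_ge, pow_le; lra).
    assert (Hp4 : 0 < (/ m) ^ 4) by (apply pow_lt; auto).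
    apply (Rmult_le_reg_l ((/ m) ^ 4)); auto. nra.
Qed.

Lemma global_bound : forall f S : form, in_H 4 f -> in_H 4 S -> (forall v, 0 <= S v) ->
  (forall t, t <> pt0 -> exists d C, 0 < d /\ forall x, near d x t -> Rabs (f x) <= C * S x) ->
  exists C, 0 <= C /\ forall v, Rabs (f v) <= C * S v.
Proof.
  intros f S Hf HS HS0 Hloc.
  destruct (bound_on_unit_sphere f S HS0 Hloc) as [C [HC Unit]].
  exists C. split; auto. apply bound_by_homogeneity; auto.
Qed.

Definition admissible (ss : list Pt) (pls : list (Pt * Pt)) (J : form -> Prop) : Prop :=
  configuration ss pls /\
  lin_subspace 2 J /\
  (forall q, J q -> J_S ss pls q) /\
  (forall v, v <> pt0 ->
     (zero_set J v <-> exists a, In a (all_pts ss pls) /\ proj_eq a v)) /\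
  (forall s, In s ss -> dim2 (grad_space J s)) /\
  (forall pl, In pl pls -> exists q g, J q /\ grad q (fst pl) g /\ g <> pt0) /\
  (forall pl, In pl pls ->
     forall v, v <> pt0 -> on_line (snd pl) v ->
       (zero_set (E_J J (fst pl)) v <-> proj_eq (fst pl) v)).

Lemma J_inH : forall ss pls J q, admissible ss pls J -> J q -> in_H 2 q.
Proof. intros ss pls J q (_ & [HJ _] & _) Hq. auto. Qed.

Lemma J_zero_s : forall ss pls J q s, admissible ss pls J -> J q -> In s ss -> q s = 0.
Proof.
  intros ss pls J q s (_ & _ & HJS & _) Hq Hs.
  destruct (HJS q Hq) as [_ [_ [Hpt _]]]. destruct (Hpt s Hs) as [_ E]. apply Rsqr_0_uniq; unfold Rsqr; auto.
Qed.

Lemma J_zero_p : forall ss pls J q pl, admissible ss pls J -> J q -> In pl pls -> q (fst pl) = 0.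
Proof.
  intros ss pls J q pl (_ & _ & HJS & _) Hq Hpl.
  destruct (HJS q Hq) as [_ [_ [_ Hpl']]]. destruct (Hpl' pl Hpl) as [_ [E _]]. apply Rsqr_0_uniq; unfold Rsqr; auto.
Qed.

(* In a chart adapted to (p_j, l_j), q in J has no constant term and no x-term
   (its square lies in F_(p_j, l_j)). *)
Lemma J_pl_chart : forall ss pls J q pl M d, admissible ss pls J -> J q -> In pl pls ->
  centered M (fst pl) -> adapted M (snd pl) -> local_coeffs 2 M q d ->
  d 0%nat 0%nat = 0 /\ d 1%nat 0%nat = 0.
Proof.
  intros ss pls J q pl M d HH Hq Hpl Hc Ha Hd.
  assert (H00 : d 0%nat 0%nat = 0).
  { replace (d 0%nat 0%nat) with (hom_poly 2 d (0,0,1)) by (rewrite hom2_exp; ring).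
    rewrite <- Hd. destruct (centered_val _ _ Hc) as [t [_ E]]. rewrite E.
    rewrite inH2_scal by (eapply J_inH; eauto). rewrite (J_zero_p ss pls J q pl); auto. ring. }
  split; auto.
  destruct HH as (_ & _ & HJS & _).
  destruct (HJS q Hq) as [_ [_ [_ Hpl']]]. destruct (Hpl' pl Hpl) as [_ [_ Ht]].
  assert (Hl : local_coeffs 4 M (fun v => q v * q v) (sqc d)).
  { intro v. rewrite sqc_spec, Hd. reflexivity. }
  specialize (Ht M (sqc d) Hc Ha Hl). rewrite ftilde00, sqc20, H00 in Ht.
  apply Rsqr_0_uniq. unfold Rsqr. lra.
Qed.

Lemma sumsq_line : forall ss pls J qs pl M, admissible ss pls J -> (forall q, In q qs -> J q) -> In pl pls ->
  centered M (fst pl) -> adapted M (snd pl) ->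
  exists K, forall x, sumsq qs (mat_apply M (x, 0, 1)) <= K * x ^ 4.
Proof.
  intros ss pls J qs pl M HH Hqs Hpl Hc Ha. induction qs as [|q qs IH].
  - exists 0. intro x. unfold sumsq; simpl. lra.
  - destruct IH as [K HK]. intros; apply Hqs; simpl; auto.
    assert (Hq : J q) by (apply Hqs; simpl; auto).
    destruct (inH_comp 2 q M (J_inH _ _ _ _ HH Hq)) as [d Hd].
    destruct (J_pl_chart ss pls J q pl M d HH Hq Hpl Hc Ha Hd) as [H00 H10].
    exists (d 2%nat 0%nat * d 2%nat 0%nat + K). intro x. rewrite sumsq_cons.
    rewrite Hd, hom2_exp, H00, H10. specialize (HK x). simpl. simpl in HK. nra.
Qed.

Lemma sumsq_J_inH : forall ss pls J qs, admissible ss pls J -> spans J qs -> in_H 4 (sumsq qs).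
Proof.
  intros ss pls J qs HH Hb. apply sumsq_inH. intros q Hq.
  destruct HH as (_ & _ & HJS & _). destruct (HJS q (basis_J _ _ _ Hb Hq)) as [_ [[HH _] _]]. auto.
Qed.

Lemma sumsq_zero_at_s : forall ss pls J qs s, admissible ss pls J -> spans J qs -> In s ss -> sumsq qs s = 0.
Proof.
  intros ss pls J qs s HH Hb Hs. assert (Hq : forall q, In q qs -> q s = 0).
  { intros q Hq. eapply J_zero_s; eauto. eapply basis_J; eauto. }
  clear Hb. induction qs. reflexivity. rewrite sumsq_cons, IHqs, Hq; simpl; auto. ring.
  intros; apply Hq; simpl; auto.
Qed.

Lemma sumsq_zero_at_p : forall ss pls J qs pl, admissible ss pls J -> spans J qs -> In pl pls -> sumsq qs (fst pl) = 0.
Proof.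
  intros ss pls J qs pl HH Hb Hs. assert (Hq : forall q, In q qs -> q (fst pl) = 0).
  { intros q Hq. eapply J_zero_p; eauto. eapply basis_J; eauto. }
  clear Hb. induction qs. reflexivity. rewrite sumsq_cons, IHqs, Hq; simpl; auto. ring.
  intros; apply Hq; simpl; auto.
Qed.

Lemma F_S_sub_I_S : forall ss pls f, F_S ss pls f -> I_S ss pls f.
Proof.
  intros ss pls f [[Hf Hpos] [Hs Hpl]]. split; [auto|split].
  - intros s Hs'. split; auto. intros M c Hc Hl. destruct (Hs s Hs') as [_ E].
    eapply nonneg_ord2; eauto.
  - intros pl Hpl'. split; auto. intros M c Hc Ha Hl. destruct (Hpl pl Hpl') as [_ [E Ht]].
    destruct (nonneg_ord2 f (fst pl) M c Hf Hpos E Hc Hl) as [H00 [H10 H01]].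
    assert (H20 : c 2%nat 0%nat = 0) by (rewrite <- ftilde00; apply (Ht M c Hc Ha Hl)).
    destruct (nonneg_pl f (fst pl) M c Hf Hpos E Hc Hl H20) as [H30 H11].
    repeat split; auto.
Qed.

Lemma sumsq_in_F_S : forall ss pls J qs, admissible ss pls J -> spans J qs -> F_S ss pls (sumsq qs).
Proof.
  intros ss pls J qs HH Hb.
  assert (HP : P34 (sumsq qs)) by (split; [eapply sumsq_J_inH; eauto|apply sumsq_nonneg]).
  split; [auto|split].
  - intros s Hs. split; auto. eapply sumsq_zero_at_s; eauto.
  - intros pl Hpl. split; auto. split. eapply sumsq_zero_at_p; eauto.
    intros M c Hc Ha Hl. rewrite ftilde00.
    destruct (sumsq_line ss pls J qs pl M HH (fun q => basis_J _ _ _ Hb) Hpl Hc Ha) as [K HK].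
    eapply (ftilde_dom (sumsq qs) (fst pl) M c K); eauto. apply HP. apply sumsq_nonneg. eapply sumsq_zero_at_p; eauto.
Qed.

Lemma sumsq_zeros : forall ss pls J qs t, admissible ss pls J -> spans J qs -> t <> pt0 -> sumsq qs t = 0 ->
  exists a, In a (all_pts ss pls) /\ proj_eq a t.
Proof.
  intros ss pls J qs t HH Hb Ht HS.
  destruct HH as (_ & _ & _ & HZ & _). apply (HZ t Ht).
  intros q Hq. destruct Hb as [_ Hsp]. destruct (Hsp q Hq) as [cs [_ ->]].
  apply lincomb_zero. apply sumsq_zero; auto.
Qed.

Lemma dominated_by_sumsq : forall J qs q, spans J qs -> J q -> exists K, 0 <= K /\ forall v, q v * q v <= K * sumsq qs v.
Proof.
  intros J qs q [_ Hsp] Hq. destruct (Hsp q Hq) as [cs [Hl ->]].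
  exists (sqsum cs). split. apply sqsum_nonneg. intro v. apply cauchy_schwarz; auto.
Qed.

(** * The key estimate |f| <= C S for f in I_S. *)

(* Hypothesis (2) in the chart at s_i: two forms of J whose linear parts at
   s_i are independent. *)
Lemma independent_forms_at_s : forall ss pls J s L, admissible ss pls J -> In s ss ->
  L <> pt0 -> s <> pt0 -> dot L s = 0 ->
  exists q1 q2 d1 d2, J q1 /\ J q2 /\
    local_coeffs 2 (chartM L s) q1 d1 /\ local_coeffs 2 (chartM L s) q2 d2 /\
    d1 0%nat 0%nat = 0 /\ d2 0%nat 0%nat = 0 /\
    d1 1%nat 0%nat * d2 0%nat 1%nat - d1 0%nat 1%nat * d2 1%nat 0%nat <> 0.
Proof.
  intros ss pls J s L HH Hs HL Hs0 HLs.
  destruct (chart_props L s HL Hs0 HLs) as [HD _].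
  pose proof HH as (_ & _ & _ & _ & Hgrad2 & _).
  destruct (Hgrad2 s Hs) as [[u [w [[q1 [Hq1 Hg1]] [[q2 [Hq2 Hg2]] Hind]]]] _].
  destruct (J_inH _ _ _ _ HH Hq1) as [c1 Hc1].
  destruct (J_inH _ _ _ _ HH Hq2) as [c2 Hc2].
  destruct (inH_comp 2 q1 (chartM L s) (J_inH _ _ _ _ HH Hq1)) as [d1 Hd1].
  destruct (inH_comp 2 q2 (chartM L s) (J_inH _ _ _ _ HH Hq2)) as [d2 Hd2].
  destruct (chart_quad q1 c1 (cross L s) L s d1 Hc1 Hd1) as [A00 [_ [A10 [A01 Aeu]]]].
  destruct (chart_quad q2 c2 (cross L s) L s d2 Hc2 Hd2) as [B00 [_ [B10 [B01 Bew]]]].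
  rewrite <- (grad_explicit _ _ _ _ Hc1 Hg1) in A10, A01, Aeu.
  rewrite <- (grad_explicit _ _ _ _ Hc2 Hg2) in B10, B01, Bew.
  rewrite (J_zero_s _ _ _ _ _ HH Hq1 Hs) in A00, Aeu.
  rewrite (J_zero_s _ _ _ _ _ HH Hq2 Hs) in B00, Bew.
  exists q1, q2, d1, d2. repeat split; auto.
  rewrite A10, A01, B10, B01. apply (indep_in_basis u w (cross L s) L s); [exact Hind|lra|lra|lra].
Qed.

Lemma sumsq_lower_at_s : forall ss pls J qs s L, admissible ss pls J -> spans J qs -> In s ss ->
  L <> pt0 -> s <> pt0 -> dot L s = 0 ->
  exists kappa eta, 0 < kappa /\ 0 < eta <= 1 /\
    forall w, in_cone eta w ->
      kappa * ((pz w * px w) ^ 2 + (pz w * py w) ^ 2) <= sumsq qs (mat_apply (chartM L s) w).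
Proof.
  intros ss pls J qs s L HH Hb Hs HL Hs0 HLs.
  destruct (independent_forms_at_s ss pls J s L HH Hs HL Hs0 HLs)
    as (q1 & q2 & d1 & d2 & Hq1 & Hq2 & Hd1 & Hd2 & A00 & B00 & HP).
  destruct (dominated_by_sumsq J qs q1 Hb Hq1) as [K1 [HK1 Hdom1]].
  destruct (dominated_by_sumsq J qs q2 Hb Hq2) as [K2 [HK2 Hdom2]].
  apply (lower_from_pair (fun w => sumsq qs (mat_apply (chartM L s) w))
           (fun w => q1 (mat_apply (chartM L s) w)) (fun w => q2 (mat_apply (chartM L s) w))
           (fun w => pz w * px w) (fun w => pz w * py w)
           (d1 1%nat 0%nat) (d1 0%nat 1%nat) (d2 1%nat 0%nat) (d2 0%nat 1%nat)
           (Rabs (d1 0%nat 2%nat) + Rabs (d1 1%nat 1%nat) + Rabs (d1 2%nat 0%nat))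
           (Rabs (d2 0%nat 2%nat) + Rabs (d2 1%nat 1%nat) + Rabs (d2 2%nat 0%nat)) K1 K2);
    auto; try (intros; apply sumsq_nonneg).
  - pose proof (Rabs_pos (d1 0%nat 2%nat)); pose proof (Rabs_pos (d1 1%nat 1%nat));
      pose proof (Rabs_pos (d1 2%nat 0%nat)); lra.
  - pose proof (Rabs_pos (d2 0%nat 2%nat)); pose proof (Rabs_pos (d2 1%nat 1%nat));
      pose proof (Rabs_pos (d2 2%nat 0%nat)); lra.
  - intros eta [[x y] z] Heta [Hx Hy]. cbv [px py pz fst snd] in Hx, Hy |- *.
    rewrite Hd1, Hd2, !hom2_exp, A00, B00. split.
    + match goal with |- Rabs ?e <= _ => replace e with
        (d1 0%nat 2%nat * y ^ 2 + d1 1%nat 1%nat * x * y + d1 2%nat 0%nat * x ^ 2) by ring end.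
      apply rem_bound_pt; auto.
    + match goal with |- Rabs ?e <= _ => replace e with
        (d2 0%nat 2%nat * y ^ 2 + d2 1%nat 1%nat * x * y + d2 2%nat 0%nat * x ^ 2) by ring end.
      apply rem_bound_pt; auto.
Qed.

(* Hypothesis (3) in the chart adapted to (p_j, l_j): a form of J whose
   linear part at p_j is a nonzero multiple of y (the x-term vanishes because
   its square lies in F_(p_j, l_j)). *)
Lemma transverse_form_at_p : forall ss pls J pl, admissible ss pls J -> In pl pls ->
  snd pl <> pt0 -> fst pl <> pt0 -> dot (snd pl) (fst pl) = 0 ->
  exists q d, J q /\ local_coeffs 2 (chartM (snd pl) (fst pl)) q d /\
    d 0%nat 0%nat = 0 /\ d 1%nat 0%nat = 0 /\ d 0%nat 1%nat <> 0.
Proof.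
  intros ss pls J pl HH Hpl HL Hp0 HLp.
  set (L := snd pl) in *. set (p0 := fst pl) in *.
  destruct (chart_props L p0 HL Hp0 HLp) as [HD [_ [_ [Hcen Had]]]].
  pose proof HH as (_ & _ & _ & _ & _ & Hgrad & _).
  destruct (Hgrad pl Hpl) as [q [g [Hq [Hg Hg0]]]].
  destruct (J_inH _ _ _ _ HH Hq) as [c Hc].
  destruct (inH_comp 2 q (chartM L p0) (J_inH _ _ _ _ HH Hq)) as [d Hd].
  destruct (chart_quad q c (cross L p0) L p0 d Hc Hd) as [_ [_ [A10 [A01 Aeu]]]].
  pose proof (grad_explicit _ _ _ _ Hc Hg) as Eg. fold p0 in Eg.
  rewrite <- Eg in A10, A01, Aeu.
  destruct (J_pl_chart ss pls J q pl (chartM L p0) d HH Hq Hpl Hcen Had Hd) as [A00 A10'].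
  assert (Hqp : q p0 = 0) by exact (J_zero_p _ _ _ _ _ HH Hq Hpl). rewrite Hqp in Aeu.
  exists q, d. repeat split; auto.
  intro E. apply Hg0. apply (vec_zero _ (cross L p0) L p0); lra.
Qed.

(* Hypothesis (4) in the same chart: a form of E_J(p_j) not vanishing on l_j,
   i.e. with chart expansion a x^2 + O(y) and a <> 0. *)
Lemma tangent_form_at_p : forall ss pls J pl, admissible ss pls J -> In pl pls ->
  snd pl <> pt0 -> fst pl <> pt0 -> dot (snd pl) (fst pl) = 0 ->
  exists q d, J q /\ local_coeffs 2 (chartM (snd pl) (fst pl)) q d /\
    d 0%nat 0%nat = 0 /\ d 1%nat 0%nat = 0 /\ d 0%nat 1%nat = 0 /\ d 2%nat 0%nat <> 0.
Proof.
  intros ss pls J pl HH Hpl HL Hp0 HLp.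
  set (L := snd pl) in *. set (p0 := fst pl) in *.
  destruct (chart_props L p0 HL Hp0 HLp) as [HD [_ [_ [Hcen _]]]].
  assert (Hnp : ~ proj_eq p0 (cross L p0)) by (apply not_proj; lra).
  assert (Hon : on_line L (cross L p0)) by (unfold on_line; cbv [dot cross px py pz fst snd]; ring).
  assert (Ha10 : cross L p0 <> pt0)
    by (intro E; rewrite E in HD; cbv [dot pt0 px py pz fst snd] in HD; lra).
  pose proof HH as (_ & _ & _ & _ & _ & _ & HE).
  assert (Hz : ~ zero_set (E_J J p0) (cross L p0)).
  { intro Hz. apply Hnp. apply (proj1 (HE pl Hpl _ Ha10 Hon)). auto. }
  apply not_all_ex_not in Hz. destruct Hz as [q Hz].
  apply imply_to_and in Hz. destruct Hz as [[Hq Hord] Hqa].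
  destruct (J_inH _ _ _ _ HH Hq) as [c Hc].
  destruct (inH_comp 2 q (chartM L p0) (J_inH _ _ _ _ HH Hq)) as [d Hd].
  destruct (Hord (chartM L p0) d Hcen Hd) as [B00 [B10 B01]].
  destruct (chart_quad q c (cross L p0) L p0 d Hc Hd) as [_ [B20 _]].
  exists q, d. repeat split; auto. rewrite B20. exact Hqa.
Qed.

(* Lower bound for S near a point p_j: the transverse form controls the
   direction of y, the tangent form the direction of l_j to second order,
   giving S >= kappa |(x^2, zy)|^2 on a thin cone. *)
Lemma sumsq_lower_at_p : forall ss pls J qs pl, admissible ss pls J -> spans J qs -> In pl pls ->
  snd pl <> pt0 -> fst pl <> pt0 -> dot (snd pl) (fst pl) = 0 ->
  exists kappa eta, 0 < kappa /\ 0 < eta <= 1 /\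
    forall w, in_cone eta w ->
      kappa * ((px w ^ 2) ^ 2 + (pz w * py w) ^ 2) <= sumsq qs (mat_apply (chartM (snd pl) (fst pl)) w).
Proof.
  intros ss pls J qs pl HH Hb Hpl HL Hp0 HLp.
  destruct (transverse_form_at_p ss pls J pl HH Hpl HL Hp0 HLp)
    as (q0 & d0 & Hq0 & Hd0 & A00 & A10 & Hal).
  destruct (tangent_form_at_p ss pls J pl HH Hpl HL Hp0 HLp)
    as (q1 & d1 & Hq1 & Hd1 & B00 & B10 & B01 & Hbe).
  set (M := chartM (snd pl) (fst pl)) in *.
  destruct (dominated_by_sumsq J qs q0 Hb Hq0) as [K1 [HK1 Hdom1]].
  destruct (dominated_by_sumsq J qs q1 Hb Hq1) as [K2 [HK2 Hdom2]].
  apply (lower_from_pair (fun w => sumsq qs (mat_apply M w))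
           (fun w => q0 (mat_apply M w)) (fun w => q1 (mat_apply M w))
           (fun w => px w ^ 2) (fun w => pz w * py w)
           (d0 2%nat 0%nat) (d0 0%nat 1%nat) (d1 2%nat 0%nat) 0
           (Rabs (d0 0%nat 2%nat) + Rabs (d0 1%nat 1%nat))
           (Rabs (d1 0%nat 2%nat) + Rabs (d1 1%nat 1%nat)) K1 K2);
    auto; try (intros; apply sumsq_nonneg).
  - intro E. assert (d0 0%nat 1%nat * d1 2%nat 0%nat = 0) by lra.
    destruct (Rmult_integral _ _ H); contradiction.
  - pose proof (Rabs_pos (d0 0%nat 2%nat)); pose proof (Rabs_pos (d0 1%nat 1%nat)); lra.
  - pose proof (Rabs_pos (d1 0%nat 2%nat)); pose proof (Rabs_pos (d1 1%nat 1%nat)); lra.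
  - intros eta [[x y] z] Heta [Hx Hy]. cbv [px py pz fst snd] in Hx, Hy |- *.
    rewrite Hd0, Hd1, !hom2_exp, A00, A10, B00, B10, B01. split.
    + match goal with |- Rabs ?e <= _ => replace e with
        (d0 1%nat 1%nat * x * y + d0 0%nat 2%nat * y ^ 2) by ring end.
      apply rem_bound_pl; auto.
    + match goal with |- Rabs ?e <= _ => replace e with
        (d1 1%nat 1%nat * x * y + d1 0%nat 2%nat * y ^ 2) by ring end.
      apply rem_bound_pl; auto.
Qed.

(* Near a zero of S, i.e. near some s_i or p_j, the local upper bound for
   f in I_S and the local lower bound for S share the same model function. *)
Lemma local_bound_at_zeros : forall ss pls J qs f t, admissible ss pls J -> spans J qs -> I_S ss pls f ->
  t <> pt0 -> sumsq qs t = 0 ->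
  exists d C, 0 < d /\ forall x, near d x t -> Rabs (f x) <= C * sumsq qs x.
Proof.
  intros ss pls J qs f t HH Hb Hf Ht HS0.
  destruct (sumsq_zeros ss pls J qs t HH Hb Ht HS0) as [a [Ha [lam [Hlam Et]]]].
  rewrite Et. pose proof HH as ((Hnz & Hlines & _) & _).
  assert (Ha0 : a <> pt0) by auto.
  unfold all_pts in Ha. apply in_app_or in Ha. destruct Ha as [Ha|Ha].
  - destruct (perp_exists a) as [L [HL HLa]].
    destruct (sumsq_lower_at_s ss pls J qs a L HH Hb Ha HL Ha0 HLa) as [ka [eta [Hka [Heta Hlow]]]].
    destruct (upper_chart_pt ss pls f a L Hf Ha HL Ha0 HLa) as [K [HK Hup]].
    destruct (chart_props L a HL Ha0 HLa) as [HD _].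
    eapply (local_bound_from_chart f (sumsq qs) (cross L a) L a
              (fun w => (pz w * px w) ^ 2 + (pz w * py w) ^ 2) ka eta K lam); auto.
    lra.
  - apply in_map_iff in Ha. destruct Ha as [pl [Epl Hpl]]. subst a.
    destruct (Hlines pl Hpl) as [HL HLp]. unfold on_line in HLp.
    destruct (sumsq_lower_at_p ss pls J qs pl HH Hb Hpl HL Ha0 HLp) as [ka [eta [Hka [Heta Hlow]]]].
    destruct (upper_chart_pl ss pls f pl Hf Hpl HL Ha0 HLp) as [K [HK Hup]].
    destruct (chart_props _ _ HL Ha0 HLp) as [HD _].
    eapply (local_bound_from_chart f (sumsq qs) (cross (snd pl) (fst pl)) (snd pl) (fst pl)
              (fun w => (px w ^ 2) ^ 2 + (pz w * py w) ^ 2) ka eta K lam); auto.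
    lra.
Qed.

Lemma I_S_dominated : forall ss pls J qs f, admissible ss pls J -> spans J qs -> I_S ss pls f ->
  exists C, 0 <= C /\ forall v, Rabs (f v) <= C * sumsq qs v.
Proof.
  intros ss pls J qs f HH Hb Hf.
  assert (HfH : in_H 4 f) by (destruct Hf; auto).
  assert (HSH : in_H 4 (sumsq qs)) by (eapply sumsq_J_inH; eauto).
  apply global_bound; auto. apply sumsq_nonneg.
  intros t Ht.
  destruct (Rle_lt_dec (sumsq qs t) 0) as [HS|HS].
  - apply (local_bound_at_zeros ss pls J); auto.
    pose proof (sumsq_nonneg qs t); lra.
  - apply local_bound_off_zeros; auto; eapply cont_inH; eauto.
Qed.

Lemma I_S_lincomb : forall ss pls cs fs, length cs = length fs -> (forall f, In f fs -> I_S ss pls f) ->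
  I_S ss pls (lincomb cs fs).
Proof.
  intros ss pls cs fs _ Hfs. split; [|split].
  - apply lincomb_inH. intros f Hf. apply Hfs; auto.
  - intros s Hs. split. apply lincomb_inH. intros f Hf. apply Hfs; auto.
    intros M c Hcen Hl.
    destruct (lincomb_coeffs (fun c => c 0%nat 0%nat = 0 /\ c 1%nat 0%nat = 0 /\ c 0%nat 1%nat = 0) M cs fs)
      as [c' [Hc' Z']].
    + repeat split; reflexivity.
    + intros a c1 d1 [? [? ?]] [? [? ?]]. repeat split; simpl; nra.
    + intros f Hf. destruct (Hfs f Hf) as [HfH [Hpt _]].
      destruct (inH_comp 4 f M HfH) as [c1 Hc1]. exists c1. split; auto.
      destruct (Hpt s Hs) as [_ Hord]. exact (Hord M c1 Hcen Hc1).
    + assert (E : forall v, hom_poly 4 c v = hom_poly 4 c' v) by (intro v; rewrite <- Hl, <- Hc'; reflexivity).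
      destruct (low_coeffs_unique c c' E) as [E00 [E10 [E01 _]]]. destruct Z' as [? [? ?]].
      repeat split; congruence.
  - intros pl Hpl. split. apply lincomb_inH. intros f Hf. apply Hfs; auto.
    intros M c Hcen Had Hl.
    destruct (lincomb_coeffs (fun c => c 0%nat 0%nat = 0 /\ c 1%nat 0%nat = 0 /\ c 0%nat 1%nat = 0 /\
        c 2%nat 0%nat = 0 /\ c 1%nat 1%nat = 0 /\ c 3%nat 0%nat = 0) M cs fs)
      as [c' [Hc' Z']].
    + repeat split; reflexivity.
    + intros a c1 d1 [? [? [? [? [? ?]]]]] [? [? [? [? [? ?]]]]]. repeat split; simpl; nra.
    + intros f Hf. destruct (Hfs f Hf) as [HfH [_ Hpl']].
      destruct (inH_comp 4 f M HfH) as [c1 Hc1]. exists c1. split; auto.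
      destruct (Hpl' pl Hpl) as [_ Hord]. exact (Hord M c1 Hcen Had Hc1).
    + assert (E : forall v, hom_poly 4 c v = hom_poly 4 c' v) by (intro v; rewrite <- Hl, <- Hc'; reflexivity).
      destruct (low_coeffs_unique c c' E) as [E00 [E10 [E01 [E20 [E11 E30]]]]]. destruct Z' as [? [? [? [? [? ?]]]]].
      repeat split; congruence.
Qed.

Lemma dominated_in_F_S : forall ss pls J qs g K, admissible ss pls J -> spans J qs ->
  P34 g -> 0 <= K -> (forall v, g v <= K * sumsq qs v) -> F_S ss pls g.
Proof.
  intros ss pls J qs g K HH Hb [Hg Hpos] HK Hdom.
  split; [split; auto|split].
  - intros s Hs. split. split; auto.
    pose proof (Hdom s). rewrite (sumsq_zero_at_s _ _ _ _ _ HH Hb Hs) in H. pose proof (Hpos s). lra.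
  - intros pl Hpl.
    assert (Hp : g (fst pl) = 0).
    { pose proof (Hdom (fst pl)). rewrite (sumsq_zero_at_p _ _ _ _ _ HH Hb Hpl) in H. pose proof (Hpos (fst pl)). lra. }
    split. split; auto. split; auto.
    intros M c Hcen Had Hl. rewrite ftilde00.
    destruct (sumsq_line ss pls J qs pl M HH (fun q => basis_J _ _ _ Hb) Hpl Hcen Had) as [K' HK'].
    apply (ftilde_dom g (fst pl) M c (K * K')); auto.
    intro x. eapply Rle_trans. apply Hdom. rewrite Rmult_assoc. apply Rmult_le_compat_l; auto.
Qed.

(* First assertion: span(F_S) = I_S.  A form f of I_S is the difference of the
   two elements f + C S and C S of F_S, where |f| <= C S. *)
Lemma span_F_S_eq_I_S : forall ss pls J qs, admissible ss pls J -> spans J qs ->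
  forall f, in_span (F_S ss pls) f <-> I_S ss pls f.
Proof.
  intros ss pls J qs HH Hb f. split.
  - intros [cs [fs [Hlen [Hfs ->]]]]. apply I_S_lincomb; auto. intros; apply F_S_sub_I_S; auto.
  - intro Hf.
    destruct (I_S_dominated ss pls J qs f HH Hb Hf) as [C [HC Hbd]].
    set (S := sumsq qs).
    assert (HSF : F_S ss pls S) by (eapply sumsq_in_F_S; eauto).
    set (g := fun v => f v + C * S v).
    assert (HgF : F_S ss pls g).
    { apply (dominated_in_F_S ss pls J qs g (2 * C) HH Hb).
      - split. apply inH_add. destruct Hf; auto. apply inH_scal. destruct HSF as [[? _] _]; auto.
        intro v. unfold g. specialize (Hbd v). pose proof (Rle_abs (- f v)).
        rewrite Rabs_Ropp in H. unfold S in *. lra.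
      - lra.
      - intro v. unfold g. specialize (Hbd v). pose proof (Rle_abs (f v)). unfold S in *. lra. }
    exists (1 :: - C :: nil), (g :: S :: nil). split. reflexivity. split.
    + intros q [<-|[<-|[]]]; auto.
    + apply functional_extensionality. intro v. unfold lincomb, g. simpl. ring.
Qed.

(* Every form in the face F_S lies in the face of P_{3,4} generated by S:
   g <= C S with C from the key estimate, so S - g / (C + 1) >= 0. *)
Lemma F_S_in_face : forall ss pls J qs g, admissible ss pls J -> spans J qs ->
  F_S ss pls g -> face_of (sumsq qs) g.
Proof.
  intros ss pls J qs g HH Hb HgF.
  pose proof (sumsq_in_F_S ss pls J qs HH Hb) as HSF.
  destruct (I_S_dominated ss pls J qs g HH Hb (F_S_sub_I_S _ _ _ HgF)) as [C [HC Hbd]].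
  split. apply HgF. exists (/ (C + 1)). split. apply Rinv_0_lt_compat; lra.
  assert (HgH : in_H 4 g) by (destruct HgF as [[? _] _]; auto).
  assert (HSH : in_H 4 (sumsq qs)) by (destruct HSF as [[? _] _]; auto).
  split.
  - apply (inH_ext _ (fun v => sumsq qs v + (- / (C + 1)) * g v)). intro v; ring.
    apply inH_add; auto. apply inH_scal; auto.
  - intro v. specialize (Hbd v). pose proof (Rle_abs (g v)).
    assert (HC1 : 0 < / (C + 1)) by (apply Rinv_0_lt_compat; lra).
    assert (/ (C + 1) * g v <= / (C + 1) * (C * sumsq qs v)) by (apply Rmult_le_compat_l; lra).
    assert (/ (C + 1) * (C * sumsq qs v) <= sumsq qs v).
    { pose proof (sumsq_nonneg qs v).
      replace (/ (C + 1) * (C * sumsq qs v)) with (sumsq qs v * (C / (C + 1))) by (field; lra).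
      assert (C / (C + 1) <= 1).
      { apply (Rmult_le_reg_r (C + 1)); [lra|].
        unfold Rdiv; rewrite Rmult_assoc, Rinv_l by lra; lra. }
      nra. }
    lra.
Qed.

Lemma sumsq_inner_form : forall ss pls J qs, admissible ss pls J -> spans J qs ->
  P34 (sumsq qs) /\ (forall g, face_of (sumsq qs) g <-> F_S ss pls g).
Proof.
  intros ss pls J qs HH Hb.
  split; [apply (sumsq_in_F_S ss pls J qs HH Hb)|intro g; split].
  - intros [Hg [eps [Heps [_ HgS]]]]. apply (dominated_in_F_S ss pls J qs g (/ eps) HH Hb Hg).
    + left. apply Rinv_0_lt_compat; auto.
    + intro v. specialize (HgS v). apply (Rmult_le_reg_l eps); auto.
      rewrite <- Rmult_assoc, Rinv_r by lra. lra.
  - apply (F_S_in_face ss pls J qs g HH Hb).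
Qed.

Theorem mainTheorem5 (ss : list Pt) (pls : list (Pt * Pt)) (J : form -> Prop) :
  configuration ss pls ->
  lin_subspace 2 J ->
  (forall q, J q -> J_S ss pls q) ->
  (* (1) Z(J) = {s_1,...,s_n,p_1,...,p_m} *)
  (forall v, v <> pt0 ->
     (zero_set J v <-> exists a, In a (all_pts ss pls) /\ proj_eq a v)) ->
  (* (2) *)
  (forall s, In s ss -> dim2 (grad_space J s)) ->
  (* (3) *)
  (forall pl, In pl pls -> exists q g, J q /\ grad q (fst pl) g /\ g <> pt0) ->
  (* (4) Z(E_J(p_j)) ∩ l_j = {p_j} *)
  (forall pl, In pl pls ->
     forall v, v <> pt0 -> on_line (snd pl) v ->
       (zero_set (E_J J (fst pl)) v <-> proj_eq (fst pl) v)) ->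
  (forall f, in_span (F_S ss pls) f <-> I_S ss pls f) /\
  (forall qs, is_basis J qs ->
     P34 (sumsq qs) /\ (forall g, face_of (sumsq qs) g <-> F_S ss pls g)).
Proof.
  intros Hconf Hlin HJS HZ Hdim2 Hgrad HE.
  assert (HH : admissible ss pls J) by (unfold admissible; tauto).
  destruct (span_exists J Hlin) as [qs0 Hqs0].
  split.
  - exact (span_F_S_eq_I_S ss pls J qs0 HH Hqs0).
  - intros qs Hbasis. exact (sumsq_inner_form ss pls J qs HH (basis_spans J qs Hbasis)).
Qed.
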